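(* The data $NGr$ defined as follows form a category: objects are nested graphs; a morphism $\mathcal N_1\to\mathcal N_3$ is an equivalence class of pairs $(\kappa,\mu)$ with $\mu:\mathcal N_1\to\mathcal N_2$ a merger and $\kappa:\mathcal N_2\to\mathcal N_3$ a contraction, where two pairs are equivalent if one is obtained from the other by moving an isomorphism of the intermediate nested graph from the merger to the contraction; the composite $(\kappa_2,\mu_2)\circ(\kappa_1,\mu_1)$ is $(\kappa_2\kappa',\mu'\mu_1)$, where $(\kappa',\mu')$ is the canonical decomposition of the admissible epi-functor $\mu_2\kappa_1$; identities are the pairs of identity functors.
   Context: A nested graph is a small category $\mathcal N$ for which there exists at least one functor $G:\mathcal N\to\underline n$ to a finite ordinal $\underline n$ (viewed as the category with a unique morphism $i\to j$ when $i\le j$ and none otherwise) sending every non-identity morphism to a non-identity morphism. Objects are called nodes. A flag is a non-identity morphism, said to be decorated by its domain. A flag is irreducible if it is not a composite of two flags. A vertex of a nested graph is a node that is not the domain of any flag; a corolla is a nested graph with exactly one vertex. A functor $\phi$ contracts a flag $f$ if $\phi(f)$ is an identity. A functor $\phi:\mathcal N_1\to\mathcal N_2$ between nested graphs is admissible if (1) for every irreducible flag $f$ of $\mathcal N_1$, $\phi(f)$ is an identity or an irreducible flag, and (2) for every irreducible flag $f:A\to B$ of $\mathcal N_1$ contracted by $\phi$, $\phi$ contracts every irreducible flag with domain $A$. An epi-functor is a functor whose image generates its codomain. A merger is an admissible epi-functor $\mu:\mathcal N_1\to\mathcal N_2$ such that $\mathcal N_2$ is a quotient of $\mathcal N_1$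 by an equivalence relation on objects. A contraction is an admissible epi-functor $\kappa:\mathcal N_1\to\mathcal N_2$ such that for every node $A_2$ of $\mathcal N_2$ the fiber $\kappa^{-1}(A_2)$ (objects mapped to $A_2$, morphisms mapped to the identity of $A_2$) is a corolla. The canonical decomposition of an admissible epi-functor $\phi:\mathcal N_1\to\mathcal N_2$ is defined as follows: declare distinct nodes $A_1,B_1$ of $\mathcal N_1$ equivalent iff $\phi(A_1)=\phi(B_1)$ and both $A_1$ and $B_1$ are vertices of the fiber $\phi^{-1}(\phi(A_1))$; let $\mathcal N_2'$ be the category obtained from $\mathcal N_1$ by identifying equivalent nodes, with morphisms freely generated by those of $\mathcal N_1$ subject to the composition relations of $\mathcal N_1$; $\mu:\mathcal N_1\to\mathcal N_2'$ is the projection and $\kappa:\mathcal N_2'\to\mathcal N_2$ the induced functor with $\phi=\kappa\mu$ (then $\mathcal N_2'$ is a nested graph, $\mu$ a merger and $\kappa$ a contraction). *)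

(* small categories, presented "arrows-only" (one type of
   arrows with domain/codomain maps), so that functor equality is plain
   pointwise equality of the object and arrow maps. *)
From Stdlib Require Import Arith.

Record cat : Type := Cat {
  ob : Type;
  ar : Type;
  dom : ar -> ob;
  cod : ar -> ob;
  idm : ob -> ar;
  (* cmp g f = g o f ; meaningful only when cod f = dom g *)
  cmp : ar -> ar -> ar;
  dom_idm : forall A, dom (idm A) = A;
  cod_idm : forall A, cod (idm A) = A;
  dom_cmp : forall g f, cod f = dom g -> dom (cmp g f) = dom f;
  cod_cmp : forall g f, cod f = dom g -> cod (cmp g f) = cod g;
  cmp_id_r : forall f, cmp f (idm (dom f)) = f;
  cmp_id_l : forall f, cmp (idm (cod f)) f = f;
  cmp_assoc : forall h g f, cod f = dom g -> cod g = dom h ->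
                cmp h (cmp g f) = cmp (cmp h g) f
}.

Arguments dom {c} _.
Arguments cod {c} _.
Arguments idm {c} _.
Arguments cmp {c} _ _.

Record functor (C D : cat) : Type := Functor {
  fo : ob C -> ob D;
  fa : ar C -> ar D;
  fa_dom : forall f, dom (fa f) = fo (dom f);
  fa_cod : forall f, cod (fa f) = fo (cod f);
  fa_id : forall A, fa (idm A) = idm (fo A);
  fa_cmp : forall g f, cod f = dom g -> fa (cmp g f) = cmp (fa g) (fa f)
}.

Arguments fo {C D} _ _.
Arguments fa {C D} _ _.

Definition idF (C : cat) : functor C C.
Proof.
  refine (@Functor C C (fun A => A) (fun f => f) _ _ _ _); reflexivity.
Defined.

Definition compF {C D E : cat} (G : functor D E) (F : functor C D) : functor C E.
Proof.
  refine (@Functor C E (fun A => fo G (fo F A)) (fun f => fa G (fa F f)) _ _ _ _).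
  - intro f. rewrite fa_dom, fa_dom. reflexivity.
  - intro f. rewrite fa_cod, fa_cod. reflexivity.
  - intro A. rewrite fa_id, fa_id. reflexivity.
  - intros g f H. rewrite (fa_cmp _ _ F g f H). apply fa_cmp.
    rewrite fa_cod, fa_dom, H. reflexivity.
Defined.

Definition feq {C D : cat} (F G : functor C D) : Prop :=
  (forall A, fo F A = fo G A) /\ (forall f, fa F f = fa G f).

Definition is_iso {C D : cat} (F : functor C D) : Prop :=
  exists G : functor D C, feq (compF G F) (idF C) /\ feq (compF F G) (idF D).

Definition is_id {N : cat} (f : ar N) : Prop := exists A, f = idm A.

(* A functor N -> (finite ordinal n) sending non-identities to
   non-identities is the same as a map g : ob N -> {0..n-1} with
   g(dom f) <= g(cod f) for all f and g(dom f) < g(cod f) for non-identity f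
   (the arrow part of a functor into a poset is forced). *)
Definition nested_graph (N : cat) : Prop :=
  exists (n : nat) (g : ob N -> nat),
    (forall A, g A < n) /\
    (forall f : ar N, g (dom f) <= g (cod f) /\ (~ is_id f -> g (dom f) < g (cod f))).

Definition flag {N : cat} (f : ar N) : Prop := ~ is_id f.

Definition irreducible {N : cat} (f : ar N) : Prop :=
  flag f /\ ~ (exists g h : ar N, flag g /\ flag h /\ cod h = dom g /\ f = cmp g h).

Definition vertex {N : cat} (A : ob N) : Prop :=
  ~ (exists f : ar N, flag f /\ dom f = A).

Definition corolla (N : cat) : Prop :=
  nested_graph N /\ exists v : ob N, vertex v /\ forall w, vertex w -> w = v.

Definition contracts {N1 N2 : cat} (phi : functor N1 N2) (f : ar N1) : Prop :=
  is_id (fa phi f).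

Definition admissible {N1 N2 : cat} (phi : functor N1 N2) : Prop :=
  (forall f : ar N1, irreducible f -> is_id (fa phi f) \/ irreducible (fa phi f)) /\
  (forall f : ar N1, irreducible f -> contracts phi f ->
     forall g : ar N1, irreducible g -> dom g = dom f -> contracts phi g).

Inductive generated {N : cat} (P : ar N -> Prop) : ar N -> Prop :=
| gen_base : forall f, P f -> generated P f
| gen_cmp : forall g f, generated P g -> generated P f -> cod f = dom g ->
            generated P (cmp g f).

Definition epi_functor {N1 N2 : cat} (phi : functor N1 N2) : Prop :=
  forall h : ar N2, generated (fun h' => exists f, fa phi f = h') h.

Definition equivalence_rel {T : Type} (R : T -> T -> Prop) : Prop :=
  (forall x, R x x) /\ (forall x y, R x y -> R y x) /\
  (forall x y z, R x y -> R y z -> R x z).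

(* q : N1 -> N2 exhibits N2 as the quotient of N1 by the relation R on
   objects (universal property of the quotient category: identify the
   R-related objects, morphisms freely generated by those of N1 subject to
   the composition relations of N1). *)
Definition is_quotient_by {N1 N2 : cat} (R : ob N1 -> ob N1 -> Prop)
  (q : functor N1 N2) : Prop :=
  (forall A B, R A B -> fo q A = fo q B) /\
  forall (C : cat) (F : functor N1 C),
    (forall A B, R A B -> fo F A = fo F B) ->
    exists G : functor N2 C, feq (compF G q) F /\
      forall G' : functor N2 C, feq (compF G' q) F -> feq G' G.

Definition merger {N1 N2 : cat} (mu : functor N1 N2) : Prop :=
  admissible mu /\ epi_functor mu /\
  exists R : ob N1 -> ob N1 -> Prop, equivalence_rel R /\ is_quotient_by R mu.

(* A is a vertex of the fiber phi^{-1}(B) (objects mapped to B, morphisms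
   mapped to the identity of B) *)
Definition fiber_vertex {N1 N2 : cat} (phi : functor N1 N2) (B : ob N2) (A : ob N1)
  : Prop :=
  fo phi A = B /\
  ~ (exists f : ar N1, fa phi f = idm B /\ flag f /\ dom f = A).

(* every fiber is a corolla (the fiber is automatically a nested graph,
   being a subcategory of one; "corolla" = exactly one vertex) *)
Definition contraction {N1 N2 : cat} (kappa : functor N1 N2) : Prop :=
  admissible kappa /\ epi_functor kappa /\
  forall B : ob N2, exists v : ob N1,
    fiber_vertex kappa B v /\ forall w, fiber_vertex kappa B w -> w = v.

(* relation of the canonical decomposition (made reflexive) *)
Definition canon_rel {N1 N2 : cat} (phi : functor N1 N2) (A B : ob N1) : Prop :=
  A = B \/
  (fo phi A = fo phi B /\ fiber_vertex phi (fo phi A) A /\ fiber_vertex phi (fo phi A) B).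

Definition canonical_decomposition {N1 N2 N2' : cat} (phi : functor N1 N2)
  (kappa : functor N2' N2) (mu : functor N1 N2') : Prop :=
  is_quotient_by (canon_rel phi) mu /\ feq (compF kappa mu) phi.

Record mpair (N1 N3 : cat) : Type := MPair {
  mid : cat;
  mmu : functor N1 mid;
  mka : functor mid N3
}.

Arguments mid {N1 N3} _.
Arguments mmu {N1 N3} _.
Arguments mka {N1 N3} _.

Definition valid_pair {N1 N3 : cat} (p : mpair N1 N3) : Prop :=
  nested_graph (mid p) /\ merger (mmu p) /\ contraction (mka p).

Definition pair_equiv {N1 N3 : cat} (p q : mpair N1 N3) : Prop :=
  exists phi : functor (mid p) (mid q), is_iso phi /\
    feq (compF phi (mmu p)) (mmu q) /\ feq (mka p) (compF (mka q) phi).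

Definition id_pair (N : cat) : mpair N N := MPair N N N (idF N) (idF N).

Definition comp_pair {N1 N3 N5 : cat} (p1 : mpair N1 N3) (p2 : mpair N3 N5)
  (N' : cat) (kappa' : functor N' (mid p2)) (mu' : functor (mid p1) N')
  : mpair N1 N5 :=
  MPair N1 N5 N' (compF mu' (mmu p1)) (compF (mka p2) kappa').

Definition middle {N1 N3 N5 : cat} (p1 : mpair N1 N3) (p2 : mpair N3 N5)
  : functor (mid p1) (mid p2) := compF (mmu p2) (mka p1).

Definition is_composite {N1 N3 N5 : cat} (p1 : mpair N1 N3) (p2 : mpair N3 N5)
  (r : mpair N1 N5) : Prop :=
  exists (N' : cat) (kappa' : functor N' (mid p2)) (mu' : functor (mid p1) N'),
    canonical_decomposition (middle p1 p2) kappa' mu' /\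
    r = comp_pair p1 p2 N' kappa' mu'.

(* A merger is determined up to isomorphism by the equivalence relation it
   quotients by, and that relation is recovered from the merger by mapping into
   an indiscrete category.  Hence two pairs are equivalent as soon as their
   mergers have the same kernel relation and their composites agree, and every
   law of the category reduces to an identity between kernel relations: the
   kernel of the merger of a composite pair is the canonical relation of the
   middle functor pulled back along the first merger.  The canonical
   decomposition exists because the quotient of a nested graph by a relation
   respecting some grading is realised by words of flags, and that quotient is
   again nested.  Composites of contractions are contractions because
   admissibility lets every non-contracted arrow over a fiber be replaced by one
   leaving the unique vertex of that fiber. *)

From Stdlib Require Import Arith Lia List Classical ClassicalEpsilon
  FunctionalExtensionality PropExtensionality ProofIrrelevance.
Import ListNotations.

Lemma feq_refl {C D} (F : functor C D) : feq F F.
Proof. split; reflexivity. Qed.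

Lemma feq_sym {C D} (F G : functor C D) : feq F G -> feq G F.
Proof. intros [H1 H2]; split; intros; symmetry; auto. Qed.

Lemma feq_trans {C D} (F G H : functor C D) : feq F G -> feq G H -> feq F H.
Proof. intros [H1 H2] [H3 H4]; split; intros; [rewrite H1|rewrite H2]; auto. Qed.

Lemma feq_compF {C D E} (G G' : functor D E) (F F' : functor C D) :
  feq G G' -> feq F F' -> feq (compF G F) (compF G' F').
Proof. intros [H1 H2] [H3 H4]; split; intros; simpl; [rewrite H3|rewrite H4]; auto. Qed.

Lemma compF_assoc {A B C D} (H : functor C D) (G : functor B C) (F : functor A B) :
  feq (compF H (compF G F)) (compF (compF H G) F).
Proof. split; intros; reflexivity. Qed.

Lemma compF_idl {A B} (F : functor A B) : feq (compF (idF B) F) F.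
Proof. split; intros; reflexivity. Qed.

Lemma is_id_idm {N : cat} (A : ob N) : is_id (idm A).
Proof. exists A; reflexivity. Qed.

Lemma is_id_dom {N : cat} (f : ar N) : is_id f -> f = idm (dom f).
Proof. intros [A ->]. rewrite dom_idm. reflexivity. Qed.

Lemma is_id_dom_cod {N : cat} (f : ar N) : is_id f -> dom f = cod f.
Proof. intros [A ->]. rewrite dom_idm, cod_idm. reflexivity. Qed.

Lemma is_id_fa {C D} (F : functor C D) f : is_id f -> is_id (fa F f).
Proof. intros [A ->]. rewrite fa_id. apply is_id_idm. Qed.

Lemma cmp_is_id_r {N : cat} (g f : ar N) : is_id f -> cod f = dom g -> cmp g f = g.
Proof.
  intros Hf Hc. rewrite (is_id_dom f Hf), (is_id_dom_cod f Hf), Hc. apply cmp_id_r.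
Qed.

Lemma cmp_is_id_l {N : cat} (g f : ar N) : is_id g -> cod f = dom g -> cmp g f = f.
Proof. intros Hg Hc. rewrite (is_id_dom g Hg), <- Hc. apply cmp_id_l. Qed.

Lemma fa_cod_dom {C D} (F : functor C D) (g f : ar C) :
  cod f = dom g -> cod (fa F f) = dom (fa F g).
Proof. intros Hc. rewrite fa_cod, fa_dom, Hc. reflexivity. Qed.

(** * Nested graphs *)

Definition grading (N : cat) (n : nat) (g : ob N -> nat) : Prop :=
  (forall A, g A < n) /\
  (forall f : ar N, g (dom f) <= g (cod f) /\ (~ is_id f -> g (dom f) < g (cod f))).

Lemma nested_is_id_cmp {N : cat} : nested_graph N -> forall g f : ar N, cod f = dom g ->
  is_id (cmp g f) -> is_id f /\ is_id g.
Proof.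
  intros [n [r [_ Hr]]] g f Hc Hid.
  apply is_id_dom_cod in Hid. rewrite dom_cmp, cod_cmp in Hid by auto.
  destruct (Hr f) as [Hf1 Hf2], (Hr g) as [Hg1 Hg2].
  split; apply NNPP; intro Hn; [apply Hf2 in Hn|apply Hg2 in Hn];
    rewrite Hc, Hid in *; lia.
Qed.

Lemma nested_flag_cmp {N : cat} : nested_graph N -> forall g f : ar N, cod f = dom g ->
  flag f -> flag (cmp g f).
Proof. intros HN g f Hc Hf Hid. apply (nested_is_id_cmp HN g f Hc) in Hid. apply Hf, Hid. Qed.

Lemma flag_first_irreducible {N : cat} : nested_graph N -> forall f : ar N, flag f ->
  irreducible f \/ exists i g, irreducible i /\ flag g /\ cod i = dom g /\ f = cmp g i.
Proof.
  intros HN. pose proof HN as [n [r [_ Hr]]].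
  enough (H : forall m (f : ar N), r (cod f) - r (dom f) <= m -> flag f ->
    irreducible f \/ exists i g, irreducible i /\ flag g /\ cod i = dom g /\ f = cmp g i)
    by (intros f Hf; eapply H; eauto).
  induction m; intros f Hm Hf.
  - destruct (Hr f) as [_ H2]. specialize (H2 Hf). lia.
  - destruct (classic (irreducible f)) as [H|H]; [left; auto|right].
    apply not_and_or in H. destruct H as [H|H]; [contradiction|].
    apply NNPP in H. destruct H as [g [h [Fg [Fh [Hc ->]]]]].
    rewrite dom_cmp, cod_cmp in Hm by auto.
    assert (Hm' : r (cod h) - r (dom h) <= m).
    { destruct (Hr g) as [_ H2], (Hr h) as [H3 _]. specialize (H2 Fg). rewrite Hc in *. lia. }
    destruct (IHm h Hm' Fh) as [Hi|[i [g' [Hi [Fg' [Hc' ->]]]]]].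
    + exists h, g. auto.
    + rewrite cod_cmp in Hc by auto. exists i, (cmp g g').
      split; [auto|split; [apply nested_flag_cmp; auto|split]].
      * rewrite dom_cmp by auto. auto.
      * apply cmp_assoc; auto.
Qed.

Definition img {C D} (F : functor C D) : ar D -> Prop := fun h => exists f, fa F f = h.

Lemma generated_mono {N : cat} (P Q : ar N -> Prop) : (forall h, P h -> Q h) ->
  forall h, generated P h -> generated Q h.
Proof. intros HPQ h H. induction H; [apply gen_base; auto | apply gen_cmp; auto]. Qed.

Lemma generated_fa {A B C} (F : functor A B) (G : functor B C) :
  forall h, generated (img F) h -> generated (img (compF G F)) (fa G h).
Proof.
  intros h H. induction H as [h [f <-]|g f Hg IHg Hf IHf Hc].
  - apply gen_base. exists f. reflexivity.
  - rewrite fa_cmp by auto. apply gen_cmp; auto. apply fa_cod_dom; auto.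
Qed.

Lemma generated_img_dom {A B} (F : functor A B) : forall h, generated (img F) h ->
  exists a, fo F a = dom h.
Proof.
  intros h H. induction H as [h [f <-]|g f Hg IHg Hf IHf Hc].
  - exists (dom f). symmetry. apply fa_dom.
  - rewrite dom_cmp by auto. auto.
Qed.

Lemma epi_fo_surj {A B} (F : functor A B) : epi_functor F -> forall b, exists a, fo F a = b.
Proof.
  intros HF b. destruct (generated_img_dom F (idm b) (HF (idm b))) as [a Ha].
  rewrite dom_idm in Ha. eauto.
Qed.

Lemma epi_compF {A B C} (F : functor A B) (G : functor B C) :
  epi_functor F -> epi_functor G -> epi_functor (compF G F).
Proof.
  intros HF HG h. induction (HG h) as [h [b <-]|g f Hg IHg Hf IHf Hc].
  - apply generated_fa, HF.
  - apply gen_cmp; auto.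
Qed.

Lemma epi_feq {A B} (F G : functor A B) : feq F G -> epi_functor F -> epi_functor G.
Proof.
  intros [_ H] HF h. apply (generated_mono (img F)); auto.
  intros h' [f <-]. exists f. symmetry. apply H.
Qed.

(* [fa F f] is the first factor of [h] not contracted by [F]. *)
Lemma img_first_factor {A B C} (F : functor A B) (H : functor B C) : nested_graph C ->
  forall h, generated (img F) h -> flag h ->
  exists f, flag (fa F f) /\ dom (fa F f) = dom h /\
     (is_id (fa H h) -> is_id (fa H (fa F f))).
Proof.
  intros HC h Hg. induction Hg as [h [f <-]|g f Hg IHg Hf IHf Hc]; intros Hn.
  - exists f. auto.
  - destruct (classic (is_id f)) as [Hi|Hi].
    + rewrite (cmp_is_id_r g f Hi Hc) in *. auto.
    + destruct (IHf Hi) as [x [X1 [X2 X3]]]. exists x. split; auto. split.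
      * rewrite dom_cmp by auto. auto.
      * intro HH. apply X3. rewrite fa_cmp in HH by auto.
        apply (nested_is_id_cmp HC) in HH; [tauto|]. apply fa_cod_dom; auto.
Qed.
Lemma fiber_vertex_exists {X M} (phi : functor X M) : nested_graph X ->
  forall a, exists v, fiber_vertex phi (fo phi a) v.
Proof.
  intros [n [r [Hb Hr]]].
  enough (H : forall m a, n - r a <= m -> exists v, fiber_vertex phi (fo phi a) v)
    by (intro a; eapply H; eauto).
  induction m; intros a Hm.
  - specialize (Hb a). lia.
  - destruct (classic (exists f, fa phi f = idm (fo phi a) /\ flag f /\ dom f = a))
      as [[f [H1 [H2 H3]]]|Hn].
    + assert (Hc : fo phi (cod f) = fo phi a) by (rewrite <- fa_cod, H1, cod_idm; auto).
      destruct (IHm (cod f)) as [v Hv].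
      { destruct (Hr f) as [_ H4]. specialize (H4 H2). rewrite H3 in H4. lia. }
      exists v. rewrite <- Hc. auto.
    + exists a. split; auto.
Qed.

Lemma admissible_feq {A B} (F G : functor A B) : feq F G -> admissible F -> admissible G.
Proof.
  intros [_ H] [H1 H2]. unfold admissible, contracts in *. split.
  - intros f Hf. rewrite <- H. auto.
  - intros f Hf Hc g Hg Hd. rewrite <- H in *. eauto.
Qed.

Lemma admissible_compF {A B C} (F : functor A B) (G : functor B C) :
  admissible F -> admissible G -> admissible (compF G F).
Proof.
  intros [F1 F2] [G1 G2]. unfold admissible, contracts in *; simpl. split.
  - intros f Hf. destruct (F1 f Hf) as [H|H].
    + left. apply is_id_fa; auto.
    + apply G1; auto.
  - intros f Hf Hc g Hg Hd. destruct (F1 f Hf) as [H|H].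
    + apply is_id_fa. eapply F2; eauto.
    + destruct (F1 g Hg) as [H'|H'].
      * apply is_id_fa; auto.
      * apply (G2 (fa F f) H Hc (fa F g) H'). rewrite !fa_dom, Hd. reflexivity.
Qed.

Section Admissible.
Variables X M : cat.
Variable k : functor X M.
Hypothesis HX : nested_graph X.
Hypothesis HM : nested_graph M.
Hypothesis Hk : admissible k.

Lemma contracted_irreducible_from (f : ar X) :
  flag f -> is_id (fa k f) -> exists i, irreducible i /\ dom i = dom f /\ contracts k i.
Proof.
  intros Hf Hkf.
  destruct (flag_first_irreducible HX f Hf) as [Hi|[i [g [Hi [Hg [Hc ->]]]]]].
  - exists f. auto.
  - exists i. rewrite dom_cmp by auto. split; [auto|split; auto].
    rewrite fa_cmp in Hkf by auto.
    apply (nested_is_id_cmp HM) in Hkf; [tauto|]. apply fa_cod_dom; auto.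
Qed.

(* Away from the vertex of its fiber, a non-contracted arrow starts with a
   contracted flag, by condition (2) of admissibility. *)
Lemma strip_contracted_flag (h : ar X) :
  ~ fiber_vertex k (fo k (dom h)) (dom h) -> flag (fa k h) ->
  exists i g, flag i /\ cod i = dom g /\ h = cmp g i /\ fa k g = fa k h.
Proof.
  intros Hv Hh.
  assert (Hex : exists f, fa k f = idm (fo k (dom h)) /\ flag f /\ dom f = dom h)
    by (apply NNPP; intro Hn; apply Hv; split; auto).
  destruct Hex as [f [Hf1 [Hf2 Hf3]]].
  destruct (contracted_irreducible_from f Hf2) as [i [Hi [Hid Hic]]];
    [rewrite Hf1; apply is_id_idm|].
  assert (Hnh : flag h) by (intro H; apply Hh, is_id_fa, H).
  destruct (flag_first_irreducible HX h Hnh) as [Hir|[i' [g [Hi' [Hg [Hc Heq]]]]]].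
  - exfalso. apply Hh, (proj2 Hk i Hi Hic h Hir). congruence.
  - assert (Hci' : is_id (fa k i')).
    { apply (proj2 Hk i Hi Hic i' Hi'). subst h. rewrite dom_cmp in Hf3 by auto. congruence. }
    exists i', g. split; [apply Hi'|split; [auto|split; auto]].
    subst h. rewrite fa_cmp by auto. symmetry. apply cmp_is_id_r; auto. apply fa_cod_dom; auto.
Qed.

Lemma fiber_vertex_factor B w : (forall u, fiber_vertex k B u -> u = w) ->
  forall h, fo k (dom h) = B -> flag (fa k h) ->
  exists h', dom h' = w /\ fa k h' = fa k h.
Proof.
  intros Hu. pose proof HX as [n [r [Hb Hr]]].
  enough (H : forall m h, n - r (dom h) <= m -> fo k (dom h) = B -> flag (fa k h) ->
     exists h', dom h' = w /\ fa k h' = fa k h) by (intros h; eapply H; eauto).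
  induction m; intros h Hm HB Hh.
  - specialize (Hb (dom h)). lia.
  - destruct (classic (fiber_vertex k B (dom h))) as [Hv|Hv]; [exists h; auto|].
    subst B. destruct (strip_contracted_flag h Hv Hh) as [i [g [Hi [Hc [-> Hkg]]]]].
    assert (HB : fo k (dom g) = fo k (dom (cmp g i))) by (rewrite <- !fa_dom, Hkg; auto).
    rewrite <- Hkg in Hh |- *. rewrite <- HB in Hu. rewrite dom_cmp in Hm by auto.
    apply IHm; auto.
    destruct (Hr i) as [_ H4]. specialize (H4 Hi). rewrite <- Hc. lia.
Qed.
End Admissible.

(** * Quotients *)

Definition nat_monoid : cat.
Proof.
  refine (@Cat unit nat (fun _ => tt) (fun _ => tt) (fun _ => 0) (fun g f => g + f)
    _ _ _ _ _ _ _); intros; try (destruct A; reflexivity); try reflexivity; lia.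
Defined.

Definition rank_functor {X : cat} (r : ob X -> nat)
  (Hr : forall f : ar X, r (dom f) <= r (cod f)) : functor X nat_monoid.
Proof.
  refine (@Functor X nat_monoid (fun _ => tt) (fun f => r (cod f) - r (dom f)) _ _ _ _);
    intros; try reflexivity.
  - rewrite dom_idm, cod_idm. simpl. lia.
  - simpl. rewrite dom_cmp, cod_cmp by auto. pose proof (Hr f). pose proof (Hr g).
    rewrite H in *. lia.
Defined.

(* Test the universal property against the rank increment, a functor to
   (nat, +) that sends no flag to 0. *)
Lemma quotient_reflects_id {X Y} (R : ob X -> ob X -> Prop) (q : functor X Y) :
  nested_graph X -> is_quotient_by R q -> forall f, is_id (fa q f) -> is_id f.
Proof.
  intros [n [r [_ Hr]]] [_ Hq] f Hf.
  assert (Hr1 : forall f : ar X, r (dom f) <= r (cod f)) by (intro g; apply Hr).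
  destruct (Hq nat_monoid (rank_functor r Hr1)) as [G [[_ HG] _]]; [reflexivity|].
  specialize (HG f). simpl in HG. rewrite (is_id_dom _ Hf), fa_id in HG. simpl in HG.
  apply NNPP. intro Hn. destruct (Hr f) as [_ H2]. specialize (H2 Hn). lia.
Qed.

Definition indiscrete (T : Type) : cat.
Proof.
  refine (@Cat T (T * T) fst snd (fun A => (A, A)) (fun g f => (fst f, snd g))
    _ _ _ _ _ _ _); intros; try reflexivity; destruct f; reflexivity.
Defined.

Definition class_functor {X : cat} (R : ob X -> ob X -> Prop)
  : functor X (indiscrete (ob X -> Prop)).
Proof.
  refine (@Functor X (indiscrete (ob X -> Prop)) (fun a => R a)
    (fun f => (R (dom f), R (cod f))) _ _ _ _); intros; simpl; try reflexivity.
  - rewrite dom_idm, cod_idm. reflexivity.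
  - rewrite dom_cmp, cod_cmp by auto. reflexivity.
Defined.

Lemma equivalence_class_eq {T} (R : T -> T -> Prop) : equivalence_rel R ->
  forall a b, R a b -> R a = R b.
Proof.
  intros [Hr [Hs Ht]] a b H. apply functional_extensionality. intro c.
  apply propositional_extensionality. split; intro; eauto.
Qed.

Lemma quotient_kernel {X Y} R (q : functor X Y) : equivalence_rel R -> is_quotient_by R q ->
  forall a b, fo q a = fo q b <-> R a b.
Proof.
  intros HR [H1 H2] a b. split; [|auto].
  intro H. destruct (H2 _ (class_functor R)) as [G [[HG _] _]].
  { intros. apply equivalence_class_eq; auto. }
  pose proof (HG a) as Ha. pose proof (HG b) as Hb. simpl in Ha, Hb.
  rewrite H, Hb in Ha. rewrite <- Ha. apply (proj1 HR).
Qed.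

Lemma quotient_factor {X Y Z} R (q : functor X Y) (F : functor X Z) : is_quotient_by R q ->
  (forall a b, R a b -> fo F a = fo F b) -> exists G, feq (compF G q) F.
Proof. intros [_ H] HF. destruct (H _ F HF) as [G [HG _]]. eauto. Qed.

Lemma quotient_unique {X Y Z} R (q : functor X Y) (G1 G2 : functor Y Z) :
  is_quotient_by R q -> feq (compF G1 q) (compF G2 q) -> feq G1 G2.
Proof.
  intros [H1 H2] He. destruct (H2 _ (compF G2 q)) as [G [HG HU]].
  { intros a b Hab. simpl. rewrite (H1 a b Hab). reflexivity. }
  apply feq_trans with G; auto. apply feq_sym, HU, feq_refl.
Qed.

Lemma quotient_iff {X Y} R R' (q : functor X Y) :
  (forall a b, R a b <-> R' a b) -> is_quotient_by R q -> is_quotient_by R' q.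
Proof.
  intros HRR [H1 H2]. split.
  - intros a b H. apply H1, HRR, H.
  - intros C F HF. apply H2. intros a b H. apply HF, HRR, H.
Qed.

Lemma quotient_compF {X Y Z} R1 R2 (q1 : functor X Y) (q2 : functor Y Z) :
  is_quotient_by R1 q1 -> epi_functor q1 -> (forall y, R2 y y) -> is_quotient_by R2 q2 ->
  is_quotient_by (fun a b => R2 (fo q1 a) (fo q1 b)) (compF q2 q1).
Proof.
  intros [A1 B1] He Hrefl [A2 B2]. split.
  - intros a b H. simpl. apply A2. auto.
  - intros C F HF.
    destruct (B1 C F) as [G1 [HG1 HU1]].
    { intros a b H. apply HF. rewrite (A1 a b H). apply Hrefl. }
    destruct (B2 C G1) as [G2 [HG2 HU2]].
    { intros y y' H.
      destruct (epi_fo_surj q1 He y) as [a <-], (epi_fo_surj q1 He y') as [b <-].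
      destruct HG1 as [HG1 _]. simpl in HG1. rewrite !HG1. apply HF. auto. }
    exists G2. split.
    + apply feq_trans with (compF (compF G2 q2) q1); [apply compF_assoc|].
      apply feq_trans with (compF G1 q1); auto. apply feq_compF; auto. apply feq_refl.
    + intros G' HG'. apply HU2, HU1, HG'.
Qed.

Definition inverse_functors {A B : cat} (psi : functor A B) (psi' : functor B A) : Prop :=
  feq (compF psi' psi) (idF A) /\ feq (compF psi psi') (idF B).

Section Inverse.
Context {A B : cat} (psi : functor A B) (psi' : functor B A).
Hypothesis Hi : inverse_functors psi psi'.

Lemma inverse_functors_sym : inverse_functors psi' psi.
Proof. destruct Hi; split; auto. Qed.

Lemma inverse_fo a : fo psi' (fo psi a) = a.
Proof. apply (proj1 (proj1 Hi)). Qed.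

Lemma inverse_fa f : fa psi' (fa psi f) = f.
Proof. apply (proj2 (proj1 Hi)). Qed.

Lemma inverse_fo' b : fo psi (fo psi' b) = b.
Proof. apply (proj1 (proj2 Hi)). Qed.

Lemma inverse_fa' h : fa psi (fa psi' h) = h.
Proof. apply (proj2 (proj2 Hi)). Qed.

Lemma inverse_fo_inj a b : fo psi a = fo psi b <-> a = b.
Proof.
  split; intro H; [|subst; auto]. rewrite <- (inverse_fo a), H. apply inverse_fo.
Qed.

Lemma inverse_reflects_id f : is_id (fa psi f) -> is_id f.
Proof. intros H. rewrite <- (inverse_fa f). apply is_id_fa, H. Qed.

Lemma inverse_reflects_id' h : is_id (fa psi' h) -> is_id h.
Proof. intros H. rewrite <- (inverse_fa' h). apply is_id_fa, H. Qed.

Lemma inverse_irreducible f : irreducible f -> irreducible (fa psi f).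
Proof.
  intros [Hf Hn]. split.
  - intro H. apply Hf, inverse_reflects_id, H.
  - intros [g [h [Fg [Fh [Hc E]]]]]. apply Hn. exists (fa psi' g), (fa psi' h).
    split; [intro H; apply Fg, inverse_reflects_id', H|].
    split; [intro H; apply Fh, inverse_reflects_id', H|].
    split; [apply fa_cod_dom; auto|].
    rewrite <- fa_cmp, <- E by auto. symmetry. apply inverse_fa.
Qed.

Lemma nested_graph_inverse : nested_graph A -> nested_graph B.
Proof.
  intros [n [r [Hb Hr]]]. exists n, (fun b => r (fo psi' b)). split; auto.
  intros h. destruct (Hr (fa psi' h)) as [H1 H2]. rewrite fa_dom, fa_cod in *. split; auto.
  intros Hn. apply H2. intro H. apply Hn, inverse_reflects_id', H.
Qed.

Lemma epi_inverse : epi_functor psi.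
Proof. intros h. apply gen_base. exists (fa psi' h). apply inverse_fa'. Qed.

Lemma admissible_compF_inverse_l {X} (F : functor X A) :
  admissible F -> admissible (compF psi F).
Proof.
  intros [F1 F2]. unfold admissible, contracts in *. simpl. split.
  - intros f Hf. destruct (F1 f Hf); [left; apply is_id_fa; auto|right].
    apply inverse_irreducible; auto.
  - intros f Hf Hc g Hg Hd. apply is_id_fa. apply (F2 f Hf); auto.
    apply inverse_reflects_id; auto.
Qed.

Lemma fiber_vertex_compF_inverse_r {Y} (G : functor B Y) y a :
  fiber_vertex (compF G psi) y a <-> fiber_vertex G y (fo psi a).
Proof.
  unfold fiber_vertex. simpl. split; intros [E N]; split; auto.
  - intros [h [F1 [F2 F3]]]. apply N. exists (fa psi' h). split; [|split].
    + rewrite inverse_fa'; auto.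
    + intro H. apply F2, inverse_reflects_id', H.
    + rewrite fa_dom, F3. apply inverse_fo.
  - intros [f [F1 [F2 F3]]]. apply N. exists (fa psi f). split; [auto|split].
    + intro H. apply F2, inverse_reflects_id, H.
    + rewrite fa_dom, F3. auto.
Qed.
End Inverse.

Lemma admissible_compF_inverse_r {A B Y} (psi : functor A B) psi' (G : functor B Y) :
  inverse_functors psi psi' -> admissible G -> admissible (compF G psi).
Proof.
  intros Hi [G1 G2]. unfold admissible, contracts in *. simpl. split.
  - intros h Hh. apply G1, (inverse_irreducible psi psi' Hi), Hh.
  - intros h Hh Hc h' Hh' Hd. apply (G2 (fa psi h)); auto;
      try apply (inverse_irreducible psi psi' Hi); auto.
    rewrite !fa_dom, Hd. auto.
Qed.

Lemma contraction_compF_inverse_r {A B Y} (psi : functor A B) psi' (G : functor B Y) :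
  inverse_functors psi psi' -> contraction G -> contraction (compF G psi).
Proof.
  intros Hi [Ha [Hep Hf]]. split; [eapply admissible_compF_inverse_r; eauto|].
  split; [apply epi_compF; auto; apply (epi_inverse psi psi' Hi)|].
  intros y. destruct (Hf y) as [v [Hv Hu]]. exists (fo psi' v).
  rewrite (fiber_vertex_compF_inverse_r psi psi' Hi), (inverse_fo' psi psi' Hi).
  split; auto. intros w Hw.
  apply (fiber_vertex_compF_inverse_r psi psi' Hi), Hu in Hw.
  rewrite <- Hw. symmetry. apply (inverse_fo psi psi' Hi).
Qed.

Lemma quotient_iso {X A B} R (q1 : functor X A) (q2 : functor X B) :
  is_quotient_by R q1 -> is_quotient_by R q2 ->
  exists psi psi', inverse_functors psi psi' /\ feq (compF psi q1) q2 /\ feq (compF psi' q2) q1.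
Proof.
  intros H1 H2.
  destruct (quotient_factor R q1 q2 H1) as [psi Hpsi]; [apply H2|].
  destruct (quotient_factor R q2 q1 H2) as [psi' Hpsi']; [apply H1|].
  exists psi, psi'. split; auto. split.
  - apply (quotient_unique R q1); auto.
    apply feq_trans with (compF psi' (compF psi q1)); [apply feq_sym, compF_assoc|].
    apply feq_trans with (compF psi' q2); [apply feq_compF; auto; apply feq_refl|].
    apply feq_trans with q1; auto. apply feq_sym, compF_idl.
  - apply (quotient_unique R q2); auto.
    apply feq_trans with (compF psi (compF psi' q2)); [apply feq_sym, compF_assoc|].
    apply feq_trans with (compF psi q1); [apply feq_compF; auto; apply feq_refl|].
    apply feq_trans with q2; auto. apply feq_sym, compF_idl.
Qed.

Section WordQuotient.
Variable X : cat.
Variable R : ob X -> ob X -> Prop.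
Hypothesis HR : equivalence_rel R.
Variable d : ob X -> nat.
Variable nb : nat.
Hypothesis Hdb : forall a, d a < nb.
Hypothesis Hd : forall f : ar X,
  d (dom f) <= d (cod f) /\ (~ is_id f -> d (dom f) < d (cod f)).
Hypothesis HdR : forall a b, R a b -> d a = d b.

Lemma R_refl a : R a a.
Proof. apply (proj1 HR). Qed.

Lemma flag_cmp (g f : ar X) : cod f = dom g -> flag f -> flag (cmp g f).
Proof.
  intros Hc Hf Hi. apply is_id_dom_cod in Hi. rewrite dom_cmp, cod_cmp in Hi by auto.
  destruct (Hd f) as [_ H1], (Hd g) as [H2 _]. specialize (H1 Hf).
  rewrite Hc, Hi in *. lia.
Qed.

Definition qob := {P : ob X -> Prop | exists a, P = R a}.

Definition cls (a : ob X) : qob := exist _ (R a) (ex_intro _ a eq_refl).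

Lemma qob_eq (x y : qob) : proj1_sig x = proj1_sig y -> x = y.
Proof. destruct x, y; simpl; intro; subst; f_equal; apply proof_irrelevance. Qed.

Lemma cls_eq a b : cls a = cls b <-> R a b.
Proof.
  split; intro H.
  - apply (f_equal (@proj1_sig _ _)) in H. simpl in H. rewrite H. apply R_refl.
  - apply qob_eq. simpl. apply equivalence_class_eq; auto.
Qed.

Definition rep (c : qob) : ob X :=
  proj1_sig (constructive_indefinite_description _ (proj2_sig c)).

Lemma rep_spec c : cls (rep c) = c.
Proof.
  unfold rep. destruct (constructive_indefinite_description _ _) as [a Ha]. simpl.
  apply qob_eq. simpl. auto.
Qed.

Lemma R_rep_cls a : R (rep (cls a)) a.
Proof. apply cls_eq, rep_spec. Qed.

(* An arrow of the quotient is an identity or a chain of flags f_0, ..., f_k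
   in which cod f_i and dom f_(i+1) are R-related but distinct; chains compose
   by concatenation, composing in X across the junction when the endpoints
   agree.  Since the grading [d] is constant on R-classes, a chain never
   becomes an identity, so this normal form is unique. *)
Fixpoint chain_last (f : ar X) (l : list (ar X)) : ar X :=
  match l with [] => f | g :: l' => chain_last g l' end.

Fixpoint chain (f : ar X) (l : list (ar X)) : Prop :=
  flag f /\
  match l with
  | [] => True
  | g :: l' => R (cod f) (dom g) /\ cod f <> dom g /\ chain g l'
  end.

Fixpoint chain_app (f : ar X) (l : list (ar X)) (g : ar X) (l2 : list (ar X))
  : ar X * list (ar X) :=
  match l with
  | [] => if excluded_middle_informative (cod f = dom g) then (cmp g f, l2)
          else (f, g :: l2)
  | f' :: l' => (f, fst (chain_app f' l' g l2) :: snd (chain_app f' l' g l2))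
  end.

Lemma chain_app_dom f l g l2 : dom (fst (chain_app f l g l2)) = dom f.
Proof.
  destruct l; simpl; auto. destruct (excluded_middle_informative _); simpl; auto.
  apply dom_cmp; auto.
Qed.

Lemma chain_last_cod_eq x y l : cod x = cod y -> cod (chain_last x l) = cod (chain_last y l).
Proof. destruct l; simpl; auto. Qed.

Lemma chain_app_cod f l g l2 :
  cod (chain_last (fst (chain_app f l g l2)) (snd (chain_app f l g l2)))
  = cod (chain_last g l2).
Proof.
  revert f. induction l as [|f' l' IH]; intros f; simpl.
  - destruct (excluded_middle_informative _); simpl; auto.
    apply chain_last_cod_eq, cod_cmp; auto.
  - apply IH.
Qed.

Lemma chain_app_cmp f g l2 h l3 : cod f = dom g ->
  chain_app (cmp g f) l2 h l3
  = (cmp (fst (chain_app g l2 h l3)) f, snd (chain_app g l2 h l3)).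
Proof.
  intros Hc. destruct l2; simpl; auto. rewrite cod_cmp by auto.
  destruct (excluded_middle_informative (cod g = dom h)); simpl; auto.
  rewrite cmp_assoc; auto.
Qed.

Lemma chain_app_assoc l f g l2 h l3 :
  chain_app (fst (chain_app f l g l2)) (snd (chain_app f l g l2)) h l3 =
  chain_app f l (fst (chain_app g l2 h l3)) (snd (chain_app g l2 h l3)).
Proof.
  revert f. induction l as [|f' l' IH]; intros f.
  - simpl. rewrite chain_app_dom.
    destruct (excluded_middle_informative (cod f = dom g)); simpl; auto.
    apply chain_app_cmp; auto.
  - simpl. rewrite IH. reflexivity.
Qed.

Lemma chain_replace_head x g l2 : chain g l2 -> flag x -> cod x = cod g -> chain x l2.
Proof. destruct l2; simpl; intros [H1 H2] H3 H4; split; auto. rewrite H4; auto. Qed.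

Lemma chain_app_chain l f g l2 : chain f l -> chain g l2 -> R (cod (chain_last f l)) (dom g) ->
  chain (fst (chain_app f l g l2)) (snd (chain_app f l g l2)).
Proof.
  revert f. induction l as [|f' l' IH]; intros f Hf Hg HR'.
  - simpl in *. destruct (excluded_middle_informative (cod f = dom g)) as [E|E]; simpl.
    + apply chain_replace_head with g; auto.
      * apply flag_cmp; auto. apply Hf.
      * apply cod_cmp; auto.
    + split; [apply Hf|]. split; auto.
  - simpl in *. destruct Hf as [H1 [H2 [H3 H4]]]. split; auto. rewrite chain_app_dom.
    split; auto.
Qed.

Lemma chain_grade f l : chain f l -> d (dom f) < d (cod (chain_last f l)).
Proof.
  revert f. induction l as [|g l IH]; intros f Hf; simpl in *.
  - apply Hd, Hf.
  - destruct Hf as [H1 [H2 [H3 H4]]]. specialize (IH g H4).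
    destruct (Hd f) as [_ H5]. specialize (H5 H1). apply HdR in H2. lia.
Qed.

Lemma chain_app_single h lh g lg : snd (chain_app h lh g lg) = [] ->
  lh = [] /\ cod h = dom g /\ fst (chain_app h lh g lg) = cmp g h /\ lg = [].
Proof.
  destruct lh; simpl; [|discriminate].
  destruct (excluded_middle_informative (cod h = dom g)); simpl; [|discriminate].
  intros ->. auto.
Qed.

Inductive qword : Type := QId (c : qob) | QChain (f : ar X) (l : list (ar X)).

Definition qword_valid (w : qword) : Prop :=
  match w with QId _ => True | QChain f l => chain f l end.

Definition qar := sig qword_valid.

Definition qdom (w : qword) : qob :=
  match w with QId c => c | QChain f l => cls (dom f) end.

Definition qcod (w : qword) : qob :=
  match w with QId c => c | QChain f l => cls (cod (chain_last f l)) end.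

Definition qcmp (w2 w1 : qword) : qword :=
  match w1, w2 with
  | QId _, _ => w2
  | QChain _ _, QId _ => w1
  | QChain f l, QChain g l2 =>
      if excluded_middle_informative (R (cod (chain_last f l)) (dom g))
      then QChain (fst (chain_app f l g l2)) (snd (chain_app f l g l2)) else w1
  end.

Lemma qcmp_valid w2 w1 : qword_valid w2 -> qword_valid w1 -> qword_valid (qcmp w2 w1).
Proof.
  destruct w1 as [c|f l]; simpl; auto. destruct w2 as [c'|g l2]; simpl; auto.
  destruct (excluded_middle_informative _); simpl; auto. intros. apply chain_app_chain; auto.
Qed.

Lemma qdom_qcmp w2 w1 : qcod w1 = qdom w2 -> qdom (qcmp w2 w1) = qdom w1.
Proof.
  destruct w1 as [c|f l]; destruct w2 as [c'|g l2]; simpl; auto.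
  destruct (excluded_middle_informative _); simpl; auto. rewrite chain_app_dom. auto.
Qed.

Lemma qcod_qcmp w2 w1 : qcod w1 = qdom w2 -> qcod (qcmp w2 w1) = qcod w2.
Proof.
  destruct w1 as [c|f l]; destruct w2 as [c'|g l2]; simpl; auto.
  intro H. destruct (excluded_middle_informative _) as [E|E]; simpl.
  - rewrite chain_app_cod. auto.
  - exfalso. apply E, cls_eq, H.
Qed.

Lemma qcmp_chain w2 f l : exists f' l', qcmp w2 (QChain f l) = QChain f' l'.
Proof. destruct w2; simpl; eauto. destruct (excluded_middle_informative _); eauto. Qed.

Lemma qcmp_assoc w3 w2 w1 : qcod w1 = qdom w2 -> qcod w2 = qdom w3 ->
  qcmp w3 (qcmp w2 w1) = qcmp (qcmp w3 w2) w1.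
Proof.
  intros H12 H23. destruct w1 as [c1|f l]; [reflexivity|].
  destruct w2 as [c2|g l2]; [reflexivity|].
  destruct w3 as [c3|h l3].
  - destruct (qcmp_chain (QChain g l2) f l) as [f' [l' E]].
    rewrite E. simpl. rewrite <- E. reflexivity.
  - simpl in *. apply cls_eq in H12. apply cls_eq in H23.
    destruct (excluded_middle_informative (R (cod (chain_last f l)) (dom g))); [|tauto].
    destruct (excluded_middle_informative (R (cod (chain_last g l2)) (dom h))); [|tauto].
    simpl. rewrite chain_app_cod, chain_app_dom.
    destruct (excluded_middle_informative (R (cod (chain_last g l2)) (dom h))); [|tauto].
    destruct (excluded_middle_informative (R (cod (chain_last f l)) (dom g))); [|tauto].
    rewrite chain_app_assoc. reflexivity.
Qed.

Lemma qar_eq (x y : qar) : proj1_sig x = proj1_sig y -> x = y.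
Proof. destruct x, y; simpl; intro; subst; f_equal; apply proof_irrelevance. Qed.

Definition word_quotient : cat.
Proof.
  refine (@Cat qob qar (fun w => qdom (proj1_sig w)) (fun w => qcod (proj1_sig w))
    (fun c => exist _ (QId c) I)
    (fun g f => exist _ (qcmp (proj1_sig g) (proj1_sig f))
                  (qcmp_valid _ _ (proj2_sig g) (proj2_sig f)))
    _ _ _ _ _ _ _).
  - reflexivity.
  - reflexivity.
  - intros g f H. simpl. apply qdom_qcmp; auto.
  - intros g f H. simpl. apply qcod_qcmp; auto.
  - intros f. apply qar_eq. reflexivity.
  - intros f. apply qar_eq. simpl. destruct (proj1_sig f); reflexivity.
  - intros h g f H1 H2. apply qar_eq. simpl. apply qcmp_assoc; auto.
Defined.

Lemma word_is_id (w : ar word_quotient) : is_id w <-> exists c, proj1_sig w = QId c.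
Proof.
  split.
  - intros [c ->]. exists c. reflexivity.
  - intros [c Hc]. exists c. apply qar_eq. simpl. auto.
Qed.

Definition word_ar (f : ar X) : qar :=
  match excluded_middle_informative (is_id f) with
  | left _ => exist _ (QId (cls (dom f))) I
  | right H => exist qword_valid (QChain f []) (conj H I)
  end.

Lemma word_ar_id f : is_id f -> proj1_sig (word_ar f) = QId (cls (dom f)).
Proof. unfold word_ar, flag. destruct (excluded_middle_informative _); simpl; tauto. Qed.

Lemma word_ar_flag f : flag f -> proj1_sig (word_ar f) = QChain f [].
Proof. unfold word_ar, flag. destruct (excluded_middle_informative _); simpl; tauto. Qed.

Definition word_proj : functor X word_quotient.
Proof.
  refine (@Functor X word_quotient cls word_ar _ _ _ _).
  - intros f. simpl.
    destruct (classic (is_id f)) as [H|H]; [rewrite word_ar_id|rewrite word_ar_flag]; auto.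
  - intros f. simpl.
    destruct (classic (is_id f)) as [H|H]; [rewrite word_ar_id|rewrite word_ar_flag]; auto.
    simpl. rewrite (is_id_dom_cod f H). auto.
  - intros A. apply qar_eq. simpl. rewrite word_ar_id by apply is_id_idm.
    rewrite dom_idm. auto.
  - intros g f Hc. apply qar_eq. simpl.
    destruct (classic (is_id f)) as [Hf|Hf].
    + rewrite (cmp_is_id_r g f Hf Hc), (word_ar_id f Hf). reflexivity.
    + destruct (classic (is_id g)) as [Hg|Hg].
      * rewrite (cmp_is_id_l g f Hg Hc), (word_ar_id g Hg), (word_ar_flag f Hf).
        reflexivity.
      * rewrite (word_ar_flag f Hf), (word_ar_flag g Hg), word_ar_flag
          by (apply flag_cmp; auto).
        simpl. destruct (excluded_middle_informative (R (cod f) (dom g))) as [_|E];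
          [|exfalso; apply E; rewrite Hc; apply R_refl].
        destruct (excluded_middle_informative (cod f = dom g)); [reflexivity|tauto].
Defined.

Lemma word_proj_reflects_id f : is_id (fa word_proj f) -> is_id f.
Proof.
  intro H. apply NNPP. intro Hn. apply word_is_id in H. destruct H as [c Hc].
  simpl in Hc. rewrite word_ar_flag in Hc by auto. discriminate.
Qed.

Lemma chain_cons_cmp f g l' (p : qword_valid (QChain f (g :: l')))
  (p' : qword_valid (QChain g l')) :
  (exist qword_valid (QChain f (g :: l')) p : ar word_quotient)
  = cmp (exist qword_valid (QChain g l') p' : ar word_quotient) (fa word_proj f).
Proof.
  apply qar_eq. simpl. destruct p as [H1 [H2 [H3 H4]]].
  rewrite word_ar_flag by auto. simpl.
  destruct (excluded_middle_informative (R (cod f) (dom g))) as [_|E]; [|tauto].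
  destruct (excluded_middle_informative (cod f = dom g)); [tauto|reflexivity].
Qed.

Lemma chain_cons_composable f g l' (p : qword_valid (QChain f (g :: l')))
  (p' : qword_valid (QChain g l')) :
  cod (fa word_proj f) = dom (exist qword_valid (QChain g l') p' : ar word_quotient).
Proof.
  simpl. destruct p as [H1 [H2 _]]. rewrite word_ar_flag by auto. apply cls_eq, H2.
Qed.

Lemma word_proj_epi : epi_functor word_proj.
Proof.
  intros [w p]. destruct w as [c|f l].
  - apply gen_base. exists (idm (rep c)). apply qar_eq. simpl.
    rewrite word_ar_id by apply is_id_idm. rewrite dom_idm, rep_spec. reflexivity.
  - revert f p. induction l as [|g l' IH]; intros f p.
    + apply gen_base. exists f. apply qar_eq. simpl. apply word_ar_flag, p.
    + assert (p' : qword_valid (QChain g l')) by apply p.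
      rewrite (chain_cons_cmp f g l' p p'). apply gen_cmp; [apply IH| |].
      * apply gen_base. exists f. reflexivity.
      * apply chain_cons_composable, p.
Qed.

Lemma word_quotient_nested : nested_graph word_quotient.
Proof.
  exists nb, (fun c => d (rep c)). split; [intro; apply Hdb|].
  intros [w p]. destruct w as [c|f l]; simpl.
  - split; auto. intro H. exfalso. apply H, word_is_id. exists c. reflexivity.
  - rewrite (HdR _ _ (R_rep_cls (dom f))), (HdR _ _ (R_rep_cls (cod (chain_last f l)))).
    pose proof (chain_grade f l p). split; auto. lia.
Qed.

Lemma word_proj_irreducible f : irreducible f -> irreducible (fa word_proj f).
Proof.
  intros [Hf Hn]. split; [intro H; apply Hf, word_proj_reflects_id, H|].
  intros [G [H [FG [FH [Hc Heq]]]]]. apply Hn.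
  destruct G as [[cg|g lg] pg]; [exfalso; apply FG, word_is_id; exists cg; reflexivity|].
  destruct H as [[ch|h lh] ph]; [exfalso; apply FH, word_is_id; exists ch; reflexivity|].
  apply (f_equal (@proj1_sig _ _)) in Heq. simpl in Heq, Hc.
  rewrite word_ar_flag in Heq by auto. apply cls_eq in Hc.
  destruct (excluded_middle_informative _) as [_|E]; [|tauto].
  injection Heq. intros E1 E2.
  destruct (chain_app_single h lh g lg (eq_sym E1)) as [-> [Hc' [E3 ->]]].
  exists g, h. split; [apply pg|]. split; [apply ph|]. split; auto. rewrite E2, E3. auto.
Qed.

Lemma word_irreducible_img (W : ar word_quotient) :
  irreducible W -> exists f, irreducible f /\ W = fa word_proj f.
Proof.
  intros [HW Hn]. destruct W as [[c|f [|g l']] p].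
  - exfalso. apply HW, word_is_id. exists c; reflexivity.
  - exists f. assert (Hf : flag f) by apply p.
    assert (E : (exist qword_valid (QChain f []) p : ar word_quotient) = fa word_proj f)
      by (apply qar_eq; simpl; rewrite word_ar_flag; auto).
    split; auto. split; auto. intros [g [h [Fg [Fh [Hc ->]]]]].
    apply Hn. exists (fa word_proj g), (fa word_proj h). rewrite E, fa_cmp by auto.
    split; [intro; apply Fg, word_proj_reflects_id; auto|].
    split; [intro; apply Fh, word_proj_reflects_id; auto|].
    split; auto. apply fa_cod_dom; auto.
  - exfalso. apply Hn. assert (p' : qword_valid (QChain g l')) by apply p.
    exists (exist qword_valid (QChain g l') p'), (fa word_proj f).
    split; [intro H; apply word_is_id in H; destruct H; discriminate|].
    split; [intro H; apply (proj1 p), word_proj_reflects_id, H|].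
    split; [apply chain_cons_composable, p|]. apply chain_cons_cmp.
Qed.

Section Lift.
Variable C : cat.
Variable F : functor X C.
Hypothesis HF : forall a b, R a b -> fo F a = fo F b.

Definition lift_ob (c : qob) : ob C := fo F (rep c).

Fixpoint lift_chain (f : ar X) (l : list (ar X)) : ar C :=
  match l with [] => fa F f | g :: l' => cmp (lift_chain g l') (fa F f) end.

Definition lift_word (w : qword) : ar C :=
  match w with QId c => idm (lift_ob c) | QChain f l => lift_chain f l end.

Lemma lift_ob_cls a : lift_ob (cls a) = fo F a.
Proof. apply HF, R_rep_cls. Qed.

Lemma lift_chain_dom_cod f l : chain f l ->
  dom (lift_chain f l) = fo F (dom f) /\ cod (lift_chain f l) = fo F (cod (chain_last f l)).
Proof.
  revert f. induction l as [|g l' IH]; intros f Hf; simpl.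
  - rewrite fa_dom, fa_cod. auto.
  - destruct Hf as [H1 [H2 [H3 H4]]]. destruct (IH g H4) as [E1 E2].
    assert (Hc : cod (fa F f) = dom (lift_chain g l')) by (rewrite fa_cod, E1; apply HF; auto).
    rewrite dom_cmp, cod_cmp, fa_dom by auto. auto.
Qed.

Lemma lift_chain_cmp f g l2 : cod f = dom g -> chain g l2 ->
  lift_chain (cmp g f) l2 = cmp (lift_chain g l2) (fa F f).
Proof.
  intros Hc Hg. destruct l2 as [|x t]; simpl; [apply fa_cmp; auto|].
  destruct Hg as [H1 [H2 [H3 H4]]]. rewrite fa_cmp by auto.
  apply cmp_assoc; [apply fa_cod_dom; auto|].
  rewrite fa_cod, (proj1 (lift_chain_dom_cod x t H4)). apply HF; auto.
Qed.

Lemma lift_chain_app l f g l2 : chain f l -> chain g l2 -> R (cod (chain_last f l)) (dom g) ->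
  lift_chain (fst (chain_app f l g l2)) (snd (chain_app f l g l2))
  = cmp (lift_chain g l2) (lift_chain f l).
Proof.
  revert f. induction l as [|f' l' IH]; intros f Hf Hg HR'.
  - simpl in *. destruct (excluded_middle_informative (cod f = dom g)); simpl; auto.
    apply lift_chain_cmp; auto.
  - simpl in *. destruct Hf as [H1 [H2 [H3 H4]]]. rewrite IH by auto.
    destruct (lift_chain_dom_cod f' l' H4) as [E1 E2].
    symmetry. apply cmp_assoc.
    + rewrite fa_cod, E1. apply HF; auto.
    + rewrite E2, (proj1 (lift_chain_dom_cod g l2 Hg)). apply HF; auto.
Qed.

Lemma lift_word_dom_cod w : qword_valid w ->
  dom (lift_word w) = lift_ob (qdom w) /\ cod (lift_word w) = lift_ob (qcod w).
Proof.
  destruct w as [c|f l]; simpl; intro Hw.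
  - rewrite dom_idm, cod_idm. auto.
  - rewrite !lift_ob_cls. apply lift_chain_dom_cod; auto.
Qed.

Definition word_lift : functor word_quotient C.
Proof.
  refine (@Functor word_quotient C lift_ob (fun w => lift_word (proj1_sig w)) _ _ _ _).
  - intros [w p]. apply lift_word_dom_cod; auto.
  - intros [w p]. apply lift_word_dom_cod; auto.
  - intros c. reflexivity.
  - intros [w2 p2] [w1 p1] Hc. simpl in *.
    destruct w1 as [c1|f l]; simpl.
    + symmetry. simpl in Hc. rewrite Hc, <- (proj1 (lift_word_dom_cod w2 p2)).
      apply cmp_id_r.
    + destruct w2 as [c2|g l2]; simpl.
      * symmetry. change c2 with (qdom (QId c2)). rewrite <- Hc.
        rewrite <- (proj2 (lift_word_dom_cod (QChain f l) p1)). apply cmp_id_l.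
      * simpl in Hc. apply cls_eq in Hc.
        destruct (excluded_middle_informative _) as [_|E]; [|tauto].
        apply lift_chain_app; auto.
Defined.

Lemma word_lift_feq : feq (compF word_lift word_proj) F.
Proof.
  split; [intros a; apply lift_ob_cls|].
  intros f. simpl. destruct (classic (is_id f)) as [H|H].
  - rewrite word_ar_id by auto. simpl.
    rewrite lift_ob_cls. rewrite (is_id_dom f H) at 2. rewrite fa_id. auto.
  - rewrite word_ar_flag by auto. reflexivity.
Qed.

Lemma word_lift_unique (G' : functor word_quotient C) :
  feq (compF G' word_proj) F -> feq G' word_lift.
Proof.
  intros [H1 H2].
  assert (Hob : forall c, fo G' c = lift_ob c)
    by (intros c; rewrite <- (rep_spec c) at 1; apply H1).
  split; auto.
  intros [[c|f l] p]; simpl.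
  - assert (E : (exist qword_valid (QId c) p : ar word_quotient) = @idm word_quotient c)
      by (apply qar_eq; reflexivity).
    rewrite E, fa_id, Hob. reflexivity.
  - revert f p. induction l as [|g l' IH]; intros f p.
    + assert (E : (exist qword_valid (QChain f []) p : ar word_quotient) = fa word_proj f)
        by (apply qar_eq; simpl; rewrite word_ar_flag; auto; apply p).
      rewrite E. apply H2.
    + assert (p' : qword_valid (QChain g l')) by apply p.
      rewrite (chain_cons_cmp f g l' p p'), fa_cmp by (apply chain_cons_composable, p).
      rewrite IH. simpl. f_equal. apply H2.
Qed.
End Lift.

Lemma word_proj_quotient : is_quotient_by R word_proj.
Proof.
  split; [intros a b H; apply cls_eq, H|].
  intros C F HF. exists (word_lift C F HF).
  split; [apply word_lift_feq|]. intros G' HG'. apply word_lift_unique; auto.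
Qed.
End WordQuotient.

Lemma fiber_vertex_feq {A B} (F G : functor A B) : feq F G ->
  forall y a, fiber_vertex F y a <-> fiber_vertex G y a.
Proof.
  intros [H1 H2] y a. unfold fiber_vertex. rewrite H1.
  split; intros [E N]; split; auto; intros [f [F1 F2]]; apply N; exists f;
    [rewrite H2|rewrite <- H2]; auto.
Qed.

Lemma contraction_feq {A B} (F G : functor A B) : feq F G -> contraction F -> contraction G.
Proof.
  intros He [Ha [Hep Hf]]. split; [eapply admissible_feq; eauto|].
  split; [eapply epi_feq; eauto|].
  intros y. destruct (Hf y) as [v [Hv Hu]]. exists v.
  rewrite <- (fiber_vertex_feq F G He). split; auto.
  intros w Hw. apply Hu, (fiber_vertex_feq F G He), Hw.
Qed.

Lemma merger_reflects_id {A B} (mu : functor A B) : nested_graph A -> merger mu ->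
  forall f, is_id (fa mu f) -> is_id f.
Proof. intros HA [_ [_ [R [_ HR]]]]. eapply quotient_reflects_id; eauto. Qed.

(** * The canonical relation *)

Lemma canon_rel_equiv {A B} (phi : functor A B) : equivalence_rel (canon_rel phi).
Proof.
  unfold canon_rel. split; [|split].
  - intros; left; auto.
  - intros x y [H|[E [F1 F2]]]; [left; auto|right]. rewrite <- E. auto.
  - intros x y z [H|[E [F1 F2]]] [H'|[E' [F1' F2']]].
    + left; congruence.
    + subst; right; auto.
    + subst; right; auto.
    + right. rewrite <- E in E', F2'. split; auto.
Qed.

Lemma canon_rel_fo {A B} (phi : functor A B) a b : canon_rel phi a b -> fo phi a = fo phi b.
Proof. intros [->|[E _]]; auto. Qed.

Lemma canon_rel_feq {A B} (F G : functor A B) : feq F G ->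
  forall a b, canon_rel F a b <-> canon_rel G a b.
Proof.
  intros He a b. unfold canon_rel. rewrite !(fiber_vertex_feq F G He).
  destruct He as [H1 _]. rewrite !H1. tauto.
Qed.

Lemma canon_rel_contraction {A B} (k : functor A B) : contraction k ->
  forall a b, canon_rel k a b <-> a = b.
Proof.
  intros [_ [_ Hf]] a b. split; [|left; auto].
  intros [H|[E [F1 F2]]]; auto. destruct (Hf (fo k a)) as [v [_ Hu]].
  rewrite (Hu a F1), (Hu b F2). auto.
Qed.

Lemma merger_fiber_vertex {A B} (mu : functor A B) : nested_graph A -> merger mu ->
  forall c, fiber_vertex mu (fo mu c) c.
Proof.
  intros HA Hm c. split; auto. intros [f [F1 [F2 F3]]]. apply F2.
  eapply merger_reflects_id; eauto. rewrite F1. apply is_id_idm.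
Qed.

Lemma canon_rel_merger {A B} (mu : functor A B) : nested_graph A -> merger mu ->
  forall a b, canon_rel mu a b <-> fo mu a = fo mu b.
Proof.
  intros HA Hm a b. split; [apply canon_rel_fo|].
  intro E. right. split; auto. split; [|rewrite E]; apply merger_fiber_vertex; auto.
Qed.

Lemma canon_rel_compF_inverse_r {A B Y} (psi : functor A B) psi' (G : functor B Y) :
  inverse_functors psi psi' ->
  forall a b, canon_rel (compF G psi) a b <-> canon_rel G (fo psi a) (fo psi b).
Proof.
  intros Hi a b. unfold canon_rel. rewrite !(fiber_vertex_compF_inverse_r psi psi' Hi).
  simpl. rewrite (inverse_fo_inj psi psi' Hi). tauto.
Qed.

Lemma fiber_vertex_compF_inverse_l {A Y Y'} (G : functor A Y) (psi : functor Y Y') psi' :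
  inverse_functors psi psi' ->
  forall a, fiber_vertex (compF psi G) (fo psi (fo G a)) a <-> fiber_vertex G (fo G a) a.
Proof.
  intros Hi a. unfold fiber_vertex. simpl. split; intros [E N]; split; auto.
  - intros [f [F1 F2]]. apply N. exists f. rewrite F1, fa_id. auto.
  - intros [f [F1 F2]]. apply N. exists f. split; auto.
    rewrite <- (inverse_fa psi psi' Hi (fa G f)), F1, fa_id, (inverse_fo psi psi' Hi). auto.
Qed.

Lemma canon_rel_compF_inverse_l {A Y Y'} (G : functor A Y) (psi : functor Y Y') psi' :
  inverse_functors psi psi' ->
  forall a b, canon_rel (compF psi G) a b <-> canon_rel G a b.
Proof.
  intros Hi a b. unfold canon_rel. simpl.
  rewrite (inverse_fo_inj psi psi' Hi), !(fiber_vertex_compF_inverse_l G psi psi' Hi).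
  split; intros [H|[E [F1 F2]]]; [left; auto|right|left; auto|right];
    (split; [auto|split; [auto|]]).
  - rewrite E. apply (fiber_vertex_compF_inverse_l G psi psi' Hi). rewrite <- E. auto.
  - rewrite E in F2 |- *. apply (fiber_vertex_compF_inverse_l G psi psi' Hi). auto.
Qed.

Lemma merger_compF {X Y Z} (m1 : functor X Y) (m2 : functor Y Z) :
  merger m1 -> merger m2 -> merger (compF m2 m1).
Proof.
  intros [A1 [E1 [R1 [Q1 H1]]]] [A2 [E2 [R2 [Q2 H2]]]].
  split; [apply admissible_compF; auto|]. split; [apply epi_compF; auto|].
  exists (fun a b => R2 (fo m1 a) (fo m1 b)). split.
  - destruct Q2 as [r [s t]]. split; [|split]; eauto.
  - apply quotient_compF with R1; auto. apply Q2.
Qed.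

Lemma fiber_vertex_of_compF {X Y Z} (k1 : functor X Y) (k2 : functor Y Z) B u :
  fiber_vertex (compF k2 k1) B u -> fiber_vertex k1 (fo k1 u) u.
Proof.
  intros [Hu1 Hu2]. split; auto. intros [h [H1 [H2 H3]]]. apply Hu2.
  exists h. simpl in *. rewrite H1, fa_id, Hu1. auto.
Qed.

Lemma fiber_vertex_compF_contraction {X Y Z} (k1 : functor X Y) (k2 : functor Y Z) :
  nested_graph X -> nested_graph Y -> nested_graph Z -> contraction k1 ->
  forall B u, fiber_vertex (compF k2 k1) B u -> fiber_vertex k2 B (fo k1 u).
Proof.
  intros HX HY HZ [A1 [E1 F1]] B u Hu.
  pose proof (fiber_vertex_of_compF k1 k2 B u Hu) as Vu. destruct Hu as [Hu1 Hu2].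
  split; auto. intros [e [H1 [H2 H3]]].
  destruct (img_first_factor k1 k2 HZ e (E1 e) H2) as [h [G1 [G2 G3]]].
  rewrite H1 in G3. specialize (G3 (is_id_idm _)).
  destruct (F1 (fo k1 u)) as [v0 [_ Hv0u]].
  destruct (fiber_vertex_factor X Y k1 HX HY A1 (fo k1 u) u) with (h := h)
    as [h' [K1 K2]]; auto.
  - intros u' Hu'. rewrite (Hv0u u' Hu'). symmetry. apply Hv0u, Vu.
  - rewrite <- fa_dom, G2. auto.
  - apply Hu2. exists h'. split; [|split; auto].
    + simpl in *. rewrite K2, (is_id_dom _ G3), fa_dom, G2, H3, Hu1. auto.
    + intro Hh. apply G1. rewrite <- K2. apply is_id_fa; auto.
Qed.

Lemma fiber_vertex_compF {X Y Z} (F : functor X Y) (G : functor Y Z) a :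
  fiber_vertex F (fo F a) a -> fiber_vertex G (fo G (fo F a)) (fo F a) ->
  fiber_vertex (compF G F) (fo G (fo F a)) a.
Proof.
  intros [_ NF] [_ NG]. split; auto. intros [h [H1 [H2 H3]]]. simpl in H1.
  destruct (classic (is_id (fa F h))) as [Hi|Hi].
  - apply NF. exists h. split; auto. rewrite (is_id_dom _ Hi), fa_dom, H3. auto.
  - apply NG. exists (fa F h). split; auto. split; auto. rewrite fa_dom, H3. auto.
Qed.

Lemma contraction_compF {X Y Z} (k1 : functor X Y) (k2 : functor Y Z) :
  nested_graph X -> nested_graph Y -> nested_graph Z ->
  contraction k1 -> contraction k2 -> contraction (compF k2 k1).
Proof.
  intros HX HY HZ Hk1 [A2 [E2 F2]]. pose proof Hk1 as [A1 [E1 F1]].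
  split; [apply admissible_compF; auto|]. split; [apply epi_compF; auto|].
  intros B. destruct (F2 B) as [m [[Hm1 Hm2] Hmu]]. destruct (F1 m) as [w [[Hw1 Hw2] Hwu]].
  subst m B. exists w. split.
  - apply fiber_vertex_compF; split; auto.
  - intros u Hu.
    pose proof (fiber_vertex_compF_contraction k1 k2 HX HY HZ Hk1 _ u Hu) as Vm.
    apply Hmu in Vm. apply Hwu. rewrite <- Vm.
    apply (fiber_vertex_of_compF k1 k2 _ u Hu).
Qed.

Lemma fiber_vertex_compF_merger {X Y Z} (mu : functor X Y) (k : functor Y Z) x :
  nested_graph X -> merger mu -> fiber_vertex k (fo k (fo mu x)) (fo mu x) ->
  fiber_vertex (compF k mu) (fo k (fo mu x)) x.
Proof.
  intros HX Hm [_ N]. split; auto. intros [f [H1 [H2 H3]]]. apply N.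
  exists (fa mu f). split; [auto|split].
  - intro H. apply H2. eapply merger_reflects_id; eauto.
  - rewrite fa_dom, H3. auto.
Qed.

Lemma canonical_decomposition_fiber_vertex {X M N'} (phi : functor X M)
  (k : functor N' M) (m : functor X N') :
  nested_graph M -> epi_functor m -> canonical_decomposition phi k m ->
  forall v, fiber_vertex phi (fo phi v) v -> fiber_vertex k (fo phi v) (fo m v).
Proof.
  intros HM Hm [Hq [Ho Ha]] v Hv. split; [apply Ho|]. intros [h [H1 [H2 H3]]].
  destruct (img_first_factor m k HM h (Hm h) H2) as [f [G1 [G2 G3]]].
  rewrite H1 in G3. specialize (G3 (is_id_idm _)). rewrite (Ha f : fa k (fa m f) = _) in G3.
  rewrite H3, fa_dom in G2. apply (quotient_kernel _ _ (canon_rel_equiv phi) Hq) in G2.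
  assert (Hf : flag f) by (intro H; apply G1, is_id_fa, H).
  destruct G2 as [G2|[E [Fa Fb]]]; [destruct Hv as [_ N]|destruct Fa as [_ N]];
    apply N; exists f; (split; [|split; auto]); rewrite (is_id_dom _ G3), fa_dom; auto.
  rewrite G2. auto.
Qed.

(** * The canonical decomposition *)

Section Canonical.
Variables X M : cat.
Variable phi : functor X M.
Variables n1 n2 : nat.
Variable r1 : ob X -> nat.
Variable r2 : ob M -> nat.
Hypothesis Hr1 : grading X n1 r1.
Hypothesis Hr2 : grading M n2 r2.
Hypothesis Hadm : admissible phi.
Hypothesis Hepi : epi_functor phi.

Let HX : nested_graph X := ex_intro _ n1 (ex_intro _ r1 Hr1).
Let HM : nested_graph M := ex_intro _ n2 (ex_intro _ r2 Hr2).

(* Lexicographic: the grade of the image in M first; within a fiber the fiber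
   vertices are put above everything else, so that identifying them keeps the
   grading monotone. *)
Definition canon_grade (a : ob X) : nat :=
  r2 (fo phi a) * S n1 +
  (if excluded_middle_informative (fiber_vertex phi (fo phi a) a) then n1 else r1 a).

Lemma canon_grade_bound a : canon_grade a < n2 * S n1.
Proof.
  unfold canon_grade. pose proof Hr2 as [B2 _]. pose proof Hr1 as [B1 _].
  specialize (B2 (fo phi a)). specialize (B1 a).
  destruct (excluded_middle_informative _); nia.
Qed.

Lemma canon_grade_canon_rel a b : canon_rel phi a b -> canon_grade a = canon_grade b.
Proof.
  intros [->|[E [F1 F2]]]; auto. unfold canon_grade. rewrite <- E.
  destruct (excluded_middle_informative (fiber_vertex phi (fo phi a) a)); [|tauto].
  destruct (excluded_middle_informative (fiber_vertex phi (fo phi a) b)); [|tauto]. auto.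
Qed.

Lemma canon_grade_mono (f : ar X) :
  canon_grade (dom f) <= canon_grade (cod f) /\
  (~ is_id f -> canon_grade (dom f) < canon_grade (cod f)).
Proof.
  destruct (classic (is_id f)) as [Hf|Hf].
  - rewrite (is_id_dom_cod f Hf). split; auto. tauto.
  - enough (canon_grade (dom f) < canon_grade (cod f)) by (split; auto; lia).
    pose proof Hr1 as [B1 R1]. pose proof Hr2 as [B2 R2]. unfold canon_grade.
    destruct (classic (is_id (fa phi f))) as [Hp|Hp].
    + assert (Ep : fo phi (dom f) = fo phi (cod f))
        by (rewrite <- fa_dom, <- fa_cod; apply is_id_dom_cod; auto).
      destruct (excluded_middle_informative (fiber_vertex phi (fo phi (dom f)) (dom f)))
        as [[_ N]|N].
      * exfalso. apply N. exists f. split; auto. rewrite (is_id_dom _ Hp), fa_dom. auto.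
      * rewrite Ep. pose proof (proj2 (R1 f) Hf). specialize (B1 (cod f)).
        destruct (excluded_middle_informative _); lia.
    + pose proof (proj2 (R2 (fa phi f)) Hp). rewrite fa_dom, fa_cod in H.
      assert (r2 (fo phi (dom f)) * S n1 + S n1 <= r2 (fo phi (cod f)) * S n1) by nia.
      pose proof (B1 (dom f)).
      destruct (excluded_middle_informative (fiber_vertex phi (fo phi (dom f)) (dom f)));
        destruct (excluded_middle_informative (fiber_vertex phi (fo phi (cod f)) (cod f)));
        lia.
Qed.

Definition canon_cat : cat :=
  word_quotient X (canon_rel phi) (canon_rel_equiv phi) canon_grade canon_grade_mono.

Definition canon_mu : functor X canon_cat :=
  word_proj X (canon_rel phi) (canon_rel_equiv phi) canon_grade canon_grade_mono.

Definition canon_kappa : functor canon_cat M :=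
  word_lift X (canon_rel phi) (canon_rel_equiv phi) canon_grade canon_grade_mono M phi
    (canon_rel_fo phi).

Lemma canon_kappa_mu : feq (compF canon_kappa canon_mu) phi.
Proof. apply word_lift_feq. Qed.

Lemma canon_kappa_fo (a : ob X) : fo canon_kappa (fo canon_mu a) = fo phi a.
Proof. apply (proj1 canon_kappa_mu). Qed.

Lemma canon_kappa_fa (f : ar X) : fa canon_kappa (fa canon_mu f) = fa phi f.
Proof. apply (proj2 canon_kappa_mu). Qed.

Lemma canon_mu_quotient : is_quotient_by (canon_rel phi) canon_mu.
Proof. apply word_proj_quotient. Qed.

Lemma canonical_decomposition_canon : canonical_decomposition phi canon_kappa canon_mu.
Proof. split; [apply canon_mu_quotient|apply canon_kappa_mu]. Qed.

Lemma canon_mu_fo_eq a b : fo canon_mu a = fo canon_mu b <-> canon_rel phi a b.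
Proof. apply quotient_kernel; [apply canon_rel_equiv|apply canon_mu_quotient]. Qed.

Lemma canon_cat_nested : nested_graph canon_cat.
Proof.
  apply (word_quotient_nested X (canon_rel phi) (canon_rel_equiv phi) canon_grade
    (n2 * S n1) canon_grade_bound canon_grade_mono canon_grade_canon_rel).
Qed.

Lemma canon_mu_merger : merger canon_mu.
Proof.
  split; [split|split].
  - intros f Hf. right. apply word_proj_irreducible; auto.
  - intros f Hf Hc. exfalso. apply (proj1 Hf). eapply word_proj_reflects_id. apply Hc.
  - apply word_proj_epi.
  - exists (canon_rel phi). split; [apply canon_rel_equiv|apply canon_mu_quotient].
Qed.

Lemma canon_kappa_admissible : admissible canon_kappa.
Proof.
  split.
  - intros W HW. destruct (word_irreducible_img X (canon_rel phi) (canon_rel_equiv phi)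
      canon_grade canon_grade_mono W HW) as [f [Hf ->]].
    fold canon_mu. rewrite canon_kappa_fa. apply Hadm; auto.
  - intros W HW Hc V HV Hd.
    destruct (word_irreducible_img X (canon_rel phi) (canon_rel_equiv phi)
      canon_grade canon_grade_mono W HW) as [f [Hf ->]].
    destruct (word_irreducible_img X (canon_rel phi) (canon_rel_equiv phi)
      canon_grade canon_grade_mono V HV) as [g [Hg ->]].
    fold canon_mu in *. unfold contracts in *. rewrite canon_kappa_fa in *.
    rewrite !fa_dom, canon_mu_fo_eq in Hd. destruct Hd as [Hd|[E [F1 F2]]].
    + apply (proj2 Hadm f Hf Hc g Hg Hd).
    + exfalso. destruct F2 as [_ N]. apply N. exists f. split; [|split; auto; apply Hf].
      rewrite (is_id_dom _ Hc), fa_dom, E. auto.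
Qed.

Lemma canon_kappa_fiber_vertex_unique v w : fiber_vertex phi (fo phi v) v ->
  fiber_vertex canon_kappa (fo phi v) w -> w = fo canon_mu v.
Proof.
  intros Hv [Hw1 Hw2]. rewrite <- (rep_spec X (canon_rel phi) w) in *.
  set (a := rep X (canon_rel phi) w) in *.
  change (cls X (canon_rel phi) a) with (fo canon_mu a) in *.
  rewrite canon_kappa_fo in Hw1. apply canon_mu_fo_eq.
  destruct (classic (fiber_vertex phi (fo phi v) a)) as [Ha|Ha].
  - right. rewrite Hw1. auto.
  - exfalso. rewrite <- Hw1 in Ha.
    assert (Hex : exists f, fa phi f = idm (fo phi a) /\ flag f /\ dom f = a)
      by (apply NNPP; intro N; apply Ha; split; auto).
    destruct Hex as [f [H1 [H2 H3]]]. apply Hw2. exists (fa canon_mu f). split; [|split].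
    + rewrite canon_kappa_fa, H1, Hw1. auto.
    + intro H. apply H2. eapply word_proj_reflects_id. apply H.
    + rewrite fa_dom, H3. auto.
Qed.

Lemma canon_kappa_contraction : contraction canon_kappa.
Proof.
  split; [apply canon_kappa_admissible|split].
  - intros h. apply generated_mono with (img phi); [|apply Hepi].
    intros h' [f <-]. exists (fa canon_mu f). apply canon_kappa_fa.
  - intros B. destruct (epi_fo_surj phi Hepi B) as [a <-].
    destruct (fiber_vertex_exists phi HX a) as [v Hv].
    assert (HvB : fo phi v = fo phi a) by apply Hv.
    rewrite <- HvB in Hv |- *. exists (fo canon_mu v). split.
    + apply (canonical_decomposition_fiber_vertex phi); auto.
      * apply word_proj_epi.
      * apply canonical_decomposition_canon.
    + intros w Hw. apply (canon_kappa_fiber_vertex_unique v w Hv Hw).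
Qed.

End Canonical.

Lemma canonical_decomposition_exists {X M} (phi : functor X M) :
  nested_graph X -> nested_graph M ->
  exists (N' : cat) (k : functor N' M) (m : functor X N'), canonical_decomposition phi k m.
Proof.
  intros [n1 [r1 H1]] [n2 [r2 H2]].
  eexists _, _, _. apply (canonical_decomposition_canon X M phi n1 n2 r1 r2 H1 H2).
Qed.

(* Any canonical decomposition is isomorphic to the explicit one. *)
Lemma canonical_decomposition_valid {X M} (phi : functor X M) :
  nested_graph X -> nested_graph M -> admissible phi -> epi_functor phi ->
  forall (N' : cat) (k : functor N' M) (m : functor X N'),
  canonical_decomposition phi k m -> nested_graph N' /\ merger m /\ contraction k.
Proof.
  intros HX HM Ha He N' k m [Hq Hk].
  pose proof HX as [n1 [r1 H1]]. pose proof HM as [n2 [r2 H2]].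
  set (kc := canon_kappa X M phi n1 n2 r1 r2 H1 H2).
  set (mc := canon_mu X M phi n1 n2 r1 r2 H1 H2).
  pose proof (canon_mu_merger X M phi n1 n2 r1 r2 H1 H2) as Hmc. fold mc in Hmc.
  destruct (quotient_iso (canon_rel phi) mc m
    (canon_mu_quotient X M phi n1 n2 r1 r2 H1 H2) Hq) as [psi [psi' [Hi [E1 E2]]]].
  split; [|split].
  - apply (nested_graph_inverse psi psi' Hi), canon_cat_nested.
  - split; [|split].
    + apply admissible_feq with (compF psi mc); auto.
      apply (admissible_compF_inverse_l psi psi' Hi), Hmc.
    + apply epi_feq with (compF psi mc); auto.
      apply epi_compF; [apply Hmc|apply (epi_inverse psi psi' Hi)].
    + exists (canon_rel phi). split; [apply canon_rel_equiv|auto].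
  - apply contraction_feq with (compF kc psi').
    + apply (quotient_unique (canon_rel phi) m); auto.
      apply feq_trans with (compF kc (compF psi' m)); [apply feq_sym, compF_assoc|].
      apply feq_trans with (compF kc mc); [apply feq_compF; auto; apply feq_refl|].
      apply feq_trans with phi; [apply canon_kappa_mu|apply feq_sym; auto].
    + apply (contraction_compF_inverse_r psi' psi kc (inverse_functors_sym psi psi' Hi)).
      apply canon_kappa_contraction; auto.
Qed.

(** * Pairs *)

Lemma pair_equiv_refl {N1 N3} (p : mpair N1 N3) : pair_equiv p p.
Proof.
  exists (idF _). split; [|split; split; intros; reflexivity].
  exists (idF _). split; split; intros; reflexivity.
Qed.

Lemma pair_equiv_sym {N1 N3} (p q : mpair N1 N3) : pair_equiv p q -> pair_equiv q p.
Proof.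
  intros [phi [[G [[G1 G2] [G3 G4]]] [[M1 M2] [K1 K2]]]].
  exists G. split; [exists phi; split; split; auto|]. simpl in *.
  split; split; intros; simpl.
  - rewrite <- M1. apply G1.
  - rewrite <- M2. apply G2.
  - rewrite K1. simpl. rewrite G3. auto.
  - rewrite K2. simpl. rewrite G4. auto.
Qed.

Lemma pair_equiv_trans {N1 N3} (p q r : mpair N1 N3) :
  pair_equiv p q -> pair_equiv q r -> pair_equiv p r.
Proof.
  intros [phi [[G [[G1 G2] [G3 G4]]] [[M1 M2] [K1 K2]]]]
         [phi' [[G' [[G1' G2'] [G3' G4']]] [[M1' M2'] [K1' K2']]]].
  simpl in *. exists (compF phi' phi).
  split; [exists (compF G G'); split; split; intros; simpl|split; split; intros; simpl].
  - rewrite G1'. apply G1.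
  - rewrite G2'. apply G2.
  - rewrite G3. apply G3'.
  - rewrite G4. apply G4'.
  - rewrite M1. apply M1'.
  - rewrite M2. apply M2'.
  - rewrite K1. apply K1'.
  - rewrite K2. apply K2'.
Qed.

Lemma pair_equiv_of_kernel {N1 N3} (r r' : mpair N1 N3) R R' :
  is_quotient_by R (mmu r) -> is_quotient_by R' (mmu r') -> (forall a b, R a b <-> R' a b) ->
  feq (compF (mka r) (mmu r)) (compF (mka r') (mmu r')) -> pair_equiv r r'.
Proof.
  intros Hq Hq' HRR Ht.
  assert (Hq'' : is_quotient_by R (mmu r'))
    by (apply (quotient_iff R'); auto; intros; symmetry; apply HRR).
  destruct (quotient_iso R (mmu r) (mmu r') Hq Hq'') as [psi [psi' [Hi [E1 _]]]].
  exists psi. split; [exists psi'; exact Hi|split; auto].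
  apply (quotient_unique R (mmu r)); auto.
  apply feq_trans with (compF (mka r') (mmu r')); auto.
  apply feq_trans with (compF (mka r') (compF psi (mmu r))); [|apply compF_assoc].
  apply feq_compF; [apply feq_refl|apply feq_sym; auto].
Qed.

Lemma idF_quotient (X : cat) : is_quotient_by eq (idF X).
Proof.
  split; [intros; subst; auto|]. intros C F HF. exists F.
  split; [apply compF_idl|]. intros G' H. exact H.
Qed.

Lemma idF_admissible (X : cat) : admissible (idF X).
Proof. split; [intros; right; auto|intros f Hf Hc; exfalso; apply (proj1 Hf), Hc]. Qed.

Lemma idF_epi (X : cat) : epi_functor (idF X).
Proof. intros h. apply gen_base. exists h. reflexivity. Qed.

Lemma valid_id_pair (N : cat) : nested_graph N -> valid_pair (id_pair N).
Proof.
  intros HN. split; [auto|split].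
  - split; [apply idF_admissible|split; [apply idF_epi|]].
    exists eq. split; [split; [|split]; intros; subst; auto|apply idF_quotient].
  - split; [apply idF_admissible|split; [apply idF_epi|]].
    intros B. exists B. split.
    + split; auto. intros [f [F1 [F2 F3]]]. apply F2. simpl in F1. rewrite F1. apply is_id_idm.
    + intros w [W1 _]. auto.
Qed.

Lemma middle_admissible_epi {N1 N3 N5} (p1 : mpair N1 N3) (p2 : mpair N3 N5) :
  valid_pair p1 -> valid_pair p2 -> admissible (middle p1 p2) /\ epi_functor (middle p1 p2).
Proof.
  intros [_ [_ [K1 [E1 _]]]] [_ [[A2 [E2 _]] _]].
  split; [apply admissible_compF|apply epi_compF]; auto.
Qed.

Lemma valid_comp_pair {N1 N3 N5} (p1 : mpair N1 N3) (p2 : mpair N3 N5) :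
  nested_graph N5 -> valid_pair p1 -> valid_pair p2 ->
  forall (N' : cat) (k : functor N' (mid p2)) (m : functor (mid p1) N'),
  canonical_decomposition (middle p1 p2) k m ->
  nested_graph N' /\ merger m /\ contraction k /\ valid_pair (comp_pair p1 p2 N' k m).
Proof.
  intros H5 V1 V2 N' k m Hd. destruct (middle_admissible_epi p1 p2 V1 V2) as [Ha He].
  destruct V1 as [HM1 [Mu1 K1]], V2 as [HM2 [Mu2 K2]].
  destruct (canonical_decomposition_valid _ HM1 HM2 Ha He N' k m Hd) as [HN [Hm Hk]].
  split; [auto|split; [auto|split; [auto|]]].
  split; [auto|split; simpl; [apply merger_compF|apply contraction_compF]; auto].
Qed.

Lemma comp_pair_quotient {N1 N3 N5} (p1 : mpair N1 N3) (p2 : mpair N3 N5) N' k m :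
  valid_pair p1 -> canonical_decomposition (middle p1 p2) k m ->
  exists R1, equivalence_rel R1 /\ is_quotient_by R1 (mmu p1) /\
  is_quotient_by (fun a b => canon_rel (middle p1 p2) (fo (mmu p1) a) (fo (mmu p1) b))
    (mmu (comp_pair p1 p2 N' k m)).
Proof.
  intros [_ [[_ [Ep [R1 [HR1 Q1]]]] _]] [Hq _]. exists R1. split; auto. split; auto.
  simpl. apply quotient_compF with R1; auto. intros; left; auto.
Qed.

Lemma comp_pair_equiv {N1 N3 N5} (p1 p1' : mpair N1 N3) (p2 p2' : mpair N3 N5)
  (r r' : mpair N1 N5) : valid_pair p1 -> valid_pair p1' ->
  pair_equiv p1 p1' -> pair_equiv p2 p2' -> is_composite p1 p2 r -> is_composite p1' p2' r' ->
  pair_equiv r r'.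
Proof.
  intros V1 V1' [s1 [[s1' Hi1] [Em1 Ek1]]] [s2 [[s2' Hi2] [Em2 Ek2]]]
    [N' [k [m [Hd ->]]]] [N'' [k' [m' [Hd' ->]]]].
  destruct (comp_pair_quotient p1 p2 N' k m V1 Hd) as [R1 [_ [_ Qr]]].
  destruct (comp_pair_quotient p1' p2' N'' k' m' V1' Hd') as [R1' [_ [_ Qr']]].
  destruct Hd as [_ [Hdo Hda]], Hd' as [_ [Hdo' Hda']].
  destruct Em1 as [Em1o Em1a], Ek1 as [Ek1o Ek1a], Em2 as [Em2o Em2a], Ek2 as [Ek2o Ek2a].
  apply (pair_equiv_of_kernel (comp_pair p1 p2 N' k m) (comp_pair p1' p2' N'' k' m')
    _ _ Qr Qr'); simpl in *.
  - intros a b. rewrite <- !Em1o.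
    rewrite <- (canon_rel_compF_inverse_r s1 s1' (middle p1' p2') Hi1).
    rewrite (canon_rel_feq (compF (middle p1' p2') s1) (compF s2 (middle p1 p2))).
    + symmetry. apply (canon_rel_compF_inverse_l (middle p1 p2) s2 s2' Hi2).
    + split; intros; simpl; [rewrite <- Ek1o, Em2o|rewrite <- Ek1a, Em2a]; auto.
  - split; intros; simpl.
    + rewrite Hdo, Hdo', <- Em1o, <- Ek1o, <- Em2o, <- Ek2o. auto.
    + rewrite Hda, Hda', <- Em1a, <- Ek1a, <- Em2a, <- Ek2a. auto.
Qed.

(* A contraction has a trivial canonical relation. *)
Lemma comp_pair_id_r {N1 N3} (p : mpair N1 N3) (r : mpair N1 N3) :
  valid_pair p -> is_composite p (id_pair N3) r -> pair_equiv r p.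
Proof.
  intros V [N' [k [m [Hd ->]]]].
  destruct (comp_pair_quotient p (id_pair N3) N' k m V Hd) as [R1 [HR1 [Q1 Qr]]].
  destruct V as [HM [Hmu Hk]], Hd as [_ [Hdo Hda]].
  apply (pair_equiv_of_kernel (comp_pair p (id_pair N3) N' k m) p _ _ Qr Q1); simpl in *.
  - intros a b.
    rewrite (canon_rel_feq (middle p (id_pair N3)) (mka p)) by (split; intros; reflexivity).
    rewrite (canon_rel_contraction _ Hk). apply quotient_kernel; auto.
  - split; intros; simpl; [rewrite Hdo|rewrite Hda]; auto.
Qed.

(* The canonical relation of a merger is its kernel. *)
Lemma comp_pair_id_l {N1 N3} (p : mpair N1 N3) (r : mpair N1 N3) :
  nested_graph N1 -> valid_pair p -> is_composite (id_pair N1) p r -> pair_equiv r p.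
Proof.
  intros HN V [N' [k [m [Hd ->]]]].
  destruct (comp_pair_quotient (id_pair N1) p N' k m (valid_id_pair N1 HN) Hd)
    as [_ [_ [_ Qr]]].
  destruct V as [HM [Hmu Hk]]. pose proof Hmu as [_ [_ [Rp [HRp Qp]]]].
  destruct Hd as [_ [Hdo Hda]].
  apply (pair_equiv_of_kernel (comp_pair (id_pair N1) p N' k m) p _ _ Qr Qp); simpl in *.
  - intros a b.
    rewrite (canon_rel_feq (middle (id_pair N1) p) (mmu p)) by (split; intros; reflexivity).
    rewrite (canon_rel_merger _ HN Hmu). apply quotient_kernel; auto.
  - split; intros; simpl; [rewrite Hdo|rewrite Hda]; auto.
Qed.

(** * Associativity *)

(* [phi1] and [theta] stand for the middle functors of (p1, p2) and (p2, p3),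
   decomposed canonically as [k m] and [ka ma]. *)
Section Associativity.
Variables M1 M2 M3 N' Y : cat.
Variable phi1 : functor M1 M2.
Variable theta : functor M2 M3.
Variable k : functor N' M2.
Variable m : functor M1 N'.
Variable ka : functor Y M3.
Variable ma : functor M2 Y.
Hypothesis HM1 : nested_graph M1.
Hypothesis HM2 : nested_graph M2.
Hypothesis HM3 : nested_graph M3.
Hypothesis HN : nested_graph N'.
Hypothesis Hd1 : canonical_decomposition phi1 k m.
Hypothesis Hm : merger m.
Hypothesis Hk : contraction k.
Hypothesis Hda : canonical_decomposition theta ka ma.
Hypothesis Hma : merger ma.

Let psi := compF theta k.
Let Phi := compF ma phi1.

Lemma m_fo_eq x y : fo m x = fo m y <-> canon_rel phi1 x y.
Proof. apply quotient_kernel; [apply canon_rel_equiv|apply Hd1]. Qed.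

Lemma ma_fo_eq u v : fo ma u = fo ma v <-> canon_rel theta u v.
Proof. apply quotient_kernel; [apply canon_rel_equiv|apply Hda]. Qed.

Lemma k_m_fo x : fo k (fo m x) = fo phi1 x.
Proof. apply (proj1 (proj2 Hd1)). Qed.

Lemma psi_m_fo x : fo psi (fo m x) = fo theta (fo phi1 x).
Proof. unfold psi. simpl. rewrite k_m_fo. auto. Qed.

Lemma fiber_vertex_Phi x :
  fiber_vertex phi1 (fo phi1 x) x -> fiber_vertex Phi (fo Phi x) x.
Proof.
  intros Vx. apply fiber_vertex_compF; auto. apply merger_fiber_vertex; auto.
Qed.

Lemma fiber_vertex_psi x : fiber_vertex phi1 (fo phi1 x) x ->
  fiber_vertex theta (fo theta (fo phi1 x)) (fo phi1 x) ->
  fiber_vertex psi (fo psi (fo m x)) (fo m x).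
Proof.
  intros Vx Vt. rewrite psi_m_fo. rewrite <- k_m_fo in Vt |- *.
  apply fiber_vertex_compF; auto. rewrite k_m_fo.
  apply (canonical_decomposition_fiber_vertex phi1); auto. apply Hm.
Qed.

Lemma fiber_vertex_psi_phi1 x :
  fiber_vertex psi (fo psi (fo m x)) (fo m x) -> fiber_vertex phi1 (fo phi1 x) x.
Proof.
  intros Vp. rewrite <- k_m_fo. apply (fiber_vertex_feq (compF k m)); [apply Hd1|].
  apply fiber_vertex_compF_merger; auto.
  apply (fiber_vertex_of_compF k theta (fo psi (fo m x))), Vp.
Qed.

Lemma fiber_vertex_psi_theta x : fiber_vertex psi (fo psi (fo m x)) (fo m x) ->
  fiber_vertex theta (fo theta (fo phi1 x)) (fo phi1 x).
Proof.
  intros Vp. rewrite <- k_m_fo. rewrite psi_m_fo, <- k_m_fo in Vp.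
  apply (fiber_vertex_compF_contraction k theta); auto.
Qed.

Lemma canon_rel_assoc x y : canon_rel psi (fo m x) (fo m y) <-> canon_rel Phi x y.
Proof.
  split.
  - intros [E|[E [Vx Vy]]].
    + apply m_fo_eq in E. destruct E as [E|[E [Vx Vy]]]; [left; auto|right].
      assert (EP : fo Phi x = fo Phi y) by (unfold Phi; simpl; rewrite E; auto).
      split; [auto|split; [|rewrite EP]; apply fiber_vertex_Phi; auto].
      rewrite <- E. auto.
    + rewrite E in Vy.
      pose proof (fiber_vertex_psi_phi1 x Vx) as Ux.
      pose proof (fiber_vertex_psi_phi1 y Vy) as Uy.
      pose proof (fiber_vertex_psi_theta x Vx) as Wx.
      pose proof (fiber_vertex_psi_theta y Vy) as Wy.
      rewrite !psi_m_fo in E.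
      assert (EP : fo Phi x = fo Phi y).
      { unfold Phi. simpl. apply ma_fo_eq. right. split; auto. split; auto. rewrite E. auto. }
      right. split; [auto|split; [|rewrite EP]; apply fiber_vertex_Phi; auto].
  - intros [E|[E [Vx Vy]]]; [subst; left; auto|].
    rewrite E in Vy.
    pose proof (fiber_vertex_of_compF phi1 ma _ x Vx) as Px.
    pose proof (fiber_vertex_of_compF phi1 ma _ y Vy) as Py.
    destruct (classic (fo phi1 x = fo phi1 y)) as [Ep|Ep].
    + left. apply m_fo_eq. right. split; auto. split; auto. rewrite Ep. auto.
    + unfold Phi in E. simpl in E. apply ma_fo_eq in E.
      destruct E as [E|[E [Tx Ty]]]; [tauto|].
      right. rewrite !psi_m_fo. split; auto.
      split; [|rewrite E]; rewrite <- psi_m_fo; apply fiber_vertex_psi; auto.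
      rewrite <- E. auto.
Qed.
End Associativity.

Lemma comp_pair_assoc {N1 N2 N3 N4 : cat} (p1 : mpair N1 N2) (p2 : mpair N2 N3)
  (p3 : mpair N3 N4) (p12 : mpair N1 N3) (p23 : mpair N2 N4) (q q' : mpair N1 N4) :
  nested_graph N3 -> nested_graph N4 ->
  valid_pair p1 -> valid_pair p2 -> valid_pair p3 ->
  is_composite p1 p2 p12 -> is_composite p12 p3 q ->
  is_composite p2 p3 p23 -> is_composite p1 p23 q' ->
  pair_equiv q q'.
Proof.
  intros H3 H4 V1 V2 V3 [N' [k [m [Hd ->]]]] [N'' [k'' [m'' [Hd'' ->]]]]
    [Na [ka [ma [Hda ->]]]] [Nb [kb [mb [Hdb ->]]]].
  destruct (valid_comp_pair p1 p2 H3 V1 V2 N' k m Hd) as [HN [Hm [Hk V12]]].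
  destruct (valid_comp_pair p2 p3 H4 V2 V3 Na ka ma Hda) as [_ [Hma _]].
  destruct (comp_pair_quotient _ p3 N'' k'' m'' V12 Hd'') as [_ [_ [_ Qr]]].
  destruct (comp_pair_quotient p1 _ Nb kb mb V1 Hdb) as [_ [_ [_ Qr']]].
  pose proof V1 as [HM1 _]. pose proof V2 as [HM2 _]. pose proof V3 as [HM3 _].
  apply (pair_equiv_of_kernel (comp_pair (comp_pair p1 p2 N' k m) p3 N'' k'' m'')
    (comp_pair p1 (comp_pair p2 p3 Na ka ma) Nb kb mb) _ _ Qr Qr').
  - intros a b. simpl.
    rewrite (canon_rel_feq _ (compF (middle p2 p3) k)) by (split; intros; reflexivity).
    rewrite (canon_rel_assoc _ _ _ _ _ (middle p1 p2) (middle p2 p3) k m ka ma);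
      auto.
    apply canon_rel_feq. split; intros; reflexivity.
  - destruct Hd as [_ [Hdo Hda1]], Hd'' as [_ [Hdo'' Hda'']],
      Hda as [_ [Hao Haa]], Hdb as [_ [Hbo Hba]]. simpl in *.
    split; intros; simpl.
    + rewrite Hdo'', Hdo, Hbo, Hao. auto.
    + rewrite Hda'', Hda1, Hba, Haa. auto.
Qed.

Theorem mainTheorem4 :
  (* the equivalence of pairs is an equivalence relation *)
  (forall (N1 N3 : cat) (p : mpair N1 N3), pair_equiv p p) /\
  (forall (N1 N3 : cat) (p q : mpair N1 N3), pair_equiv p q -> pair_equiv q p) /\
  (forall (N1 N3 : cat) (p q r : mpair N1 N3),
     pair_equiv p q -> pair_equiv q r -> pair_equiv p r) /\
  (* identities are morphisms *)
  (forall N : cat, nested_graph N -> valid_pair (id_pair N)) /\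
  (* composition is defined and yields a morphism *)
  (forall (N1 N3 N5 : cat) (p1 : mpair N1 N3) (p2 : mpair N3 N5),
     nested_graph N1 -> nested_graph N3 -> nested_graph N5 ->
     valid_pair p1 -> valid_pair p2 ->
     admissible (middle p1 p2) /\ epi_functor (middle p1 p2) /\
     (exists (N' : cat) (kappa' : functor N' (mid p2)) (mu' : functor (mid p1) N'),
        canonical_decomposition (middle p1 p2) kappa' mu') /\
     (forall (N' : cat) (kappa' : functor N' (mid p2)) (mu' : functor (mid p1) N'),
        canonical_decomposition (middle p1 p2) kappa' mu' ->
        nested_graph N' /\ merger mu' /\ contraction kappa' /\
        valid_pair (comp_pair p1 p2 N' kappa' mu'))) /\
  (* composition is well defined on equivalence classes *)
  (forall (N1 N3 N5 : cat) (p1 p1' : mpair N1 N3) (p2 p2' : mpair N3 N5)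
          (r r' : mpair N1 N5),
     nested_graph N1 -> nested_graph N3 -> nested_graph N5 ->
     valid_pair p1 -> valid_pair p1' -> valid_pair p2 -> valid_pair p2' ->
     pair_equiv p1 p1' -> pair_equiv p2 p2' ->
     is_composite p1 p2 r -> is_composite p1' p2' r' -> pair_equiv r r') /\
  (* left and right unit laws *)
  (forall (N1 N3 : cat) (p : mpair N1 N3) (r : mpair N1 N3),
     nested_graph N1 -> nested_graph N3 -> valid_pair p ->
     is_composite p (id_pair N3) r -> pair_equiv r p) /\
  (forall (N1 N3 : cat) (p : mpair N1 N3) (r : mpair N1 N3),
     nested_graph N1 -> nested_graph N3 -> valid_pair p ->
     is_composite (id_pair N1) p r -> pair_equiv r p) /\
  (* associativity *)
  (forall (N1 N2 N3 N4 : cat) (p1 : mpair N1 N2) (p2 : mpair N2 N3) (p3 : mpair N3 N4)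
          (p12 : mpair N1 N3) (p23 : mpair N2 N4) (q q' : mpair N1 N4),
     nested_graph N1 -> nested_graph N2 -> nested_graph N3 -> nested_graph N4 ->
     valid_pair p1 -> valid_pair p2 -> valid_pair p3 ->
     is_composite p1 p2 p12 -> is_composite p12 p3 q ->
     is_composite p2 p3 p23 -> is_composite p1 p23 q' ->
     pair_equiv q q').
Proof.
  split; [exact @pair_equiv_refl|].
  split; [exact @pair_equiv_sym|].
  split; [exact @pair_equiv_trans|].
  split; [exact valid_id_pair|].
  split.
  { intros N1 N3 N5 p1 p2 _ _ H5 V1 V2.
    destruct (middle_admissible_epi p1 p2 V1 V2) as [Ha He].
    split; [exact Ha|split; [exact He|split]].
    - apply canonical_decomposition_exists; [apply V1|apply V2].
    - apply valid_comp_pair; assumption. }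
  split; [intros N1 N3 N5 p1 p1' p2 p2' r r' _ _ _ V1 V1' _ _;
          apply comp_pair_equiv; assumption|].
  split; [intros N1 N3 p r _ _; apply comp_pair_id_r|].
  split; [intros N1 N3 p r HN _; apply comp_pair_id_l, HN|].
  intros N1 N2 N3 N4 p1 p2 p3 p12 p23 q q' _ _ H3 H4 V1 V2 V3.
  apply (comp_pair_assoc p1 p2 p3 p12 p23); assumption.
Qed.
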